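(* Assume RH and let $T$ be large. For $0<k\le 1/2$, $$\sum_{0<\gamma\le T}\zeta'(\rho)\mathcal{N}(\rho,k-1)\mathcal{N}(\overline{\rho},k) \ll_k \Big(\sum_{0<\gamma\le T}|\zeta'(\rho)|^{2k}\Big)^{1/2}\Big(\sum_{0<\gamma\le T}|\zeta'(\rho)|^2|\mathcal{N}(\rho,k-1)|^2\Big)^{(1-k)/2}\Big(\sum_{0<\gamma\le T}\prod_{i=1}^{\mathcal{J}}\big(|\mathcal{N}_i(\rho,k)|^2+|\mathcal{Q}_i(\rho,k)|^{2r_k}\big)\Big)^{k/2}.$$ For $k>1/2$, $$\sum_{0<\gamma\le T}\zeta'(\rho)\mathcal{N}(\rho,k-1)\mathcal{N}(\overline{\rho},k) \ll_k \Big(\sum_{0<\gamma\le T}|\zeta'(\rho)|^{2k}\Big)^{\frac{1}{2k}}\Big(\sum_{0<\gamma\le T}\prod_{j=1}^{\mathcal{J}}\big(|\mathcal{N}_j(\rho,k)|^2+|\mathcal{Q}_j(\rho,k)|^{2r_k}\big)\Big)^{\frac{2k-1}{2k}}.$$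
   Context: Under RH every nontrivial zero of $\zeta$ is written $\rho=\tfrac12+i\gamma$, $\gamma\in\mathbb{R}$; sums over $0<\gamma\le T$ run over such zeros with multiplicity. Fix real $k>0$, a large number $M$ depending only on $k$, and a large number $T$. Set $\alpha_0=0$, $\alpha_j = 20^{j-1}/(\log\log T)^2$ for $j\ge1$, and $\mathcal{J}=1+\max\{j:\alpha_j\le 10^{-M}\}$. Let $I_j=(T^{\alpha_{j-1}},T^{\alpha_j}]$. Put $E_\ell(x)=\sum_{i=0}^{\lceil \ell\rceil} x^i/i!$. For $1\le j\le \mathcal{J}$, real $\alpha$ and complex $s$ define $\mathcal{P}_j(s)=\sum_{p\in I_j}p^{-s}$ ($p$ prime), $\mathcal{N}_j(s,\alpha)=E_{e^2k\alpha_j^{-3/4}}(\alpha\mathcal{P}_j(s))$, $\mathcal{N}(s,\alpha)=\prod_{j=1}^{\mathcal{J}}\mathcal{N}_j(s,\alpha)$, and $\mathcal{Q}_j(s,k)=\big(64\max(2,k+3/2)\mathcal{P}_j(s)/\lceil e^2k\alpha_j^{-3/4}\rceil\big)^{\lceil e^2k\alpha_j^{-3/4}\rceil}$. Set $r_k=2+\lceil 1/k\rceil$ if $0<k\le1/2$ and $r_k=1+\lceil 2k/(2k-1)\rceil$ if $k>1/2$. *)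

From Stdlib Require Import Reals Lra Lia ZArith Znumtheory List ClassicalEpsilon.
From Coquelicot Require Import Coquelicot.
Open Scope R_scope.

Definition Cexp (z : C) : C :=
  (exp (Re z) * cos (Im z), exp (Re z) * sin (Im z)).

Definition Crpow (x : R) (s : C) : C := Cexp (Cmult (RtoC (ln x)) s).

Fixpoint Cpown (z : C) (n : nat) : C :=
  match n with O => RtoC 1 | S n' => Cmult z (Cpown z n') end.

Definition csum {A} (l : list A) (f : A -> C) : C :=
  fold_right Cplus (RtoC 0) (map f l).
Definition cprod {A} (l : list A) (f : A -> C) : C :=
  fold_right Cmult (RtoC 1) (map f l).
Definition rsum {A} (l : list A) (f : A -> R) : R :=
  fold_right Rplus 0 (map f l).
Definition rprod {A} (l : list A) (f : A -> R) : R :=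
  fold_right Rmult 1 (map f l).

(* real power x^y, with the convention 0^y = 0 (used only for y > 0) *)
Definition rpow (x y : R) : R := if Rle_dec x 0 then 0 else Rpower x y.

(* ceiling of a real, as a natural number (arguments are positive) *)
Definition ceilN (x : R) : nat := Z.to_nat (1 - up (- x))%Z.

Definition Cderiv (f : C -> C) (z : C) : C :=
  epsilon (inhabits (RtoC 0))
    (fun l => is_derive (K := C_AbsRing) (V := C_NormedModule) f z l).

(* Dirichlet eta function  eta(s) = sum_{n>=1} (-1)^{n-1} n^{-s}  (Re s > 0) *)
Definition eta (s : C) : C :=
  epsilon (inhabits (RtoC 0))
    (fun l => is_series (K := C_AbsRing) (V := C_NormedModule)
       (fun n : nat => Cmult (RtoC ((-1) ^ n)) (Crpow (INR (S n)) (Copp s))) l).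

(* zeta(s) = eta(s) / (1 - 2^{1-s}), the analytic continuation of zeta
   to Re s > 0, s <> 1 (up to removable points on Re s = 1) *)
Definition zeta (s : C) : C :=
  Cdiv (eta s) (Cminus (RtoC 1) (Crpow 2 (Cminus (RtoC 1) s))).

Definition zeta' (s : C) : C := Cderiv zeta s.

Definition RH : Prop :=
  forall s : C, 0 < Re s < 1 -> zeta s = RtoC 0 -> Re s = 1 / 2.

Definition zero_order (f : C -> C) (z : C) (m : nat) : Prop :=
  exists c : C, c <> RtoC 0 /\
    filterlim (fun s => Cdiv (f s) (Cpown (Cminus s z) m)) (locally' z) (locally c).

Definition rho (g : R) : C := (1 / 2, g).

(* l lists each ordinate gamma in (0,T] of a zero 1/2+i gamma exactly once,
   together with its multiplicity *)
Definition zeros_list (T : R) (l : list (R * nat)) : Prop :=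
  NoDup (map fst l) /\
  (forall g m, In (g, m) l ->
     0 < g <= T /\ zeta (rho g) = RtoC 0 /\ zero_order zeta (rho g) m) /\
  (forall g, 0 < g <= T -> zeta (rho g) = RtoC 0 -> exists m, In (g, m) l).

Definition zsumC (l : list (R * nat)) (F : C -> C) : C :=
  csum l (fun p => Cmult (RtoC (INR (snd p))) (F (rho (fst p)))).
Definition zsumR (l : list (R * nat)) (F : C -> R) : R :=
  rsum l (fun p => INR (snd p) * F (rho (fst p))).

Definition alpha (T : R) (j : nat) : R :=
  match j with O => 0 | S j' => 20 ^ j' / (ln (ln T)) ^ 2 end.

Definition is_calJ (T M : R) (J : nat) : Prop :=
  (1 <= J)%nat /\ alpha T (J - 1) <= Rpower 10 (- M) /\
  (forall j, alpha T j <= Rpower 10 (- M) -> (j <= J - 1)%nat).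

(* P_j(s) = sum_{p prime, T^{alpha_{j-1}} < p <= T^{alpha_j}} p^{-s} *)
Definition Pj (T : R) (j : nat) (s : C) : C :=
  csum (seq 0 (S (Z.to_nat (up (Rpower T (alpha T j))))))
    (fun n => if prime_dec (Z.of_nat n) then
                if Rlt_dec (Rpower T (alpha T (j - 1))) (INR n) then
                  if Rle_dec (INR n) (Rpower T (alpha T j)) then
                    Crpow (INR n) (Copp s)
                  else RtoC 0
                else RtoC 0
              else RtoC 0).

Definition Eexp (l : R) (x : C) : C :=
  csum (seq 0 (S (ceilN l))) (fun i => Cdiv (Cpown x i) (RtoC (INR (fact i)))).

Definition ellj (k T : R) (j : nat) : R := exp 2 * k * Rpower (alpha T j) (- (3 / 4)).

Definition Nj (k T : R) (j : nat) (s : C) (a : R) : C :=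
  Eexp (ellj k T j) (Cmult (RtoC a) (Pj T j s)).

Definition Nmol (k T : R) (J : nat) (s : C) (a : R) : C :=
  cprod (seq 1 J) (fun j => Nj k T j s a).

Definition Qj (k T : R) (j : nat) (s : C) : C :=
  Cpown (Cdiv (Cmult (RtoC (64 * Rmax 2 (k + 3 / 2))) (Pj T j s))
              (RtoC (INR (ceilN (ellj k T j)))))
        (ceilN (ellj k T j)).

Definition r_k (k : R) : nat :=
  if Rle_dec k (1 / 2) then (2 + ceilN (1 / k))%nat
  else (1 + ceilN (2 * k / (2 * k - 1)))%nat.

Definition prodNQ (k T : R) (J : nat) (s : C) : R :=
  rprod (seq 1 J) (fun j =>
    Cmod (Nj k T j s k) ^ 2 + Cmod (Qj k T j s) ^ (2 * r_k k)).

(** The estimate is a pointwise inequality for the mollifier followed by Hölder's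
    inequality over the zeros; it holds unconditionally, with
    [M0 = 20], [T0 = e^e] and a constant depending on [k] only.

    - Truncated exponential.  For [E_n(w) = sum_{i<=n} w^i/i!], a Taylor-remainder
      argument for [t |-> e^{-tw} E_n(tw)] gives [|E_n(w)| = e^{Re w} (1 + O(delta))]
      with [delta <= e^{-n/4}] when [|w| <= n/e^2], and [|E_n(w)| <= (e max(1,|w|/n))^n].
    - One factor.  With [z = P_j(s)], [l = ceil(e^2 k alpha_j^{-3/4})] and
      [D_j = |N_j(s,k)|^2 + |Q_j(s,k)|^{2 r_k}]:
        [|N_j(s,k-1)| |N_j(conj s,k)| <= e^{c d_j} D_j^{(2k-1)/(2k)}]   if [k > 1/2],
        [|N_j(s,k-1)|^2 |N_j(conj s,k)|^{2/k} <= e^{c d_j} D_j]         if [k <= 1/2],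
      where [d_j = e^{-l/4}]: for small [|z|] the main terms [e^{(k-1) Re z}], [e^{k Re z}]
      match exactly, for large [|z|] the term [Q_j] dominates (this fixes [r_k]).
    - Product over [j].  [d_j <= 4 alpha_j / k^2] and the [alpha_j] grow geometrically
      with [alpha_J <= 1], so [sum_j d_j <= 8/k^2] and the product loses a constant.
    - Sum over zeros.  For [k > 1/2] Hölder with exponents [2k, 2k/(2k-1)]; for
      [k <= 1/2] split [|zeta'| a b = |zeta'|^k (|zeta'| a)^{1-k} (a^k b)] and use
      Hölder with exponents [2, 2/(1-k), 2/k]. *)

From Stdlib Require Import Reals List Lra Lia ZArith.
From Coquelicot Require Import Coquelicot.
Open Scope R_scope.

Lemma exp_mono x y : x <= y -> exp x <= exp y.
Proof.
  intros H; destruct (Rle_lt_or_eq_dec _ _ H) as [H'|E];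
    [left; now apply exp_increasing | rewrite E; lra].
Qed.

Lemma exp_pow_n x n : exp x ^ n = exp (INR n * x).
Proof.
  induction n as [|n IH]; [simpl; now rewrite Rmult_0_l, exp_0|].
  rewrite S_INR; simpl pow; rewrite IH, <- exp_plus; f_equal; ring.
Qed.

Lemma exp1_bounds : 2 <= exp 1 <= 3.
Proof. split; [generalize (exp_ineq1_le 1); lra | apply exp_le_3]. Qed.

Lemma exp2_bounds : 4 <= exp 2 <= 9.
Proof.
  replace 2 with (1 + 1) by ring; rewrite exp_plus.
  generalize exp1_bounds; intros; split; nra.
Qed.

(* [x^2/4 <= e^x]: the quadratic lower bound used to control [e^{-l/4}] by [1/l^2]. *)
Lemma exp_sq_lower x : 0 <= x -> x ^ 2 / 4 <= exp x.
Proof.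
  intros Hx; replace (exp x) with (exp (x / 2) ^ 2)
    by (rewrite exp_pow_n; f_equal; simpl; field).
  replace (x ^ 2 / 4) with ((x / 2) ^ 2) by field.
  apply pow_incr; generalize (exp_ineq1_le (x / 2)); lra.
Qed.

Lemma fact_pos n : 0 < INR (fact n).
Proof. apply lt_0_INR, lt_O_fact. Qed.

(* [x^n/n! <= e^x] for [x >= 0]: one term of the exponential series. *)
Lemma pow_fact_le_exp x n : 0 <= x -> x ^ n / INR (fact n) <= exp x.
Proof.
  intros Hx; eapply Rle_trans; [|now apply (exp_ge_taylor x n)].
  destruct n as [|n]; simpl; [lra|].
  assert (0 <= sum_f_R0 (fun i => x ^ i / INR (fact i)) n).
  { apply cond_pos_sum; intros i; apply Rmult_le_pos;
      [now apply pow_le | left; apply Rinv_0_lt_compat, fact_pos]. }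
  lra.
Qed.

Lemma ceilN_ge x : x <= INR (ceilN x).
Proof.
  unfold ceilN; destruct (archimed (- x)) as [H1 H2].
  destruct (Z_le_gt_dec 0 (1 - up (- x))) as [Hp|Hn].
  - rewrite INR_IZR_INZ, Z2Nat.id by auto; rewrite minus_IZR; lra.
  - replace (Z.to_nat (1 - up (- x))) with 0%nat by lia; simpl.
    assert (Hn2 : (1 - up (- x) < 0)%Z) by lia; apply IZR_lt in Hn2.
    rewrite minus_IZR in Hn2; lra.
Qed.

Lemma ceilN_pos x : 0 < x -> (1 <= ceilN x)%nat.
Proof. intros Hx; generalize (ceilN_ge x); destruct (ceilN x); simpl; [lra|lia]. Qed.

Lemma rpow_pos x y : 0 < x -> rpow x y = Rpower x y.
Proof. intros H; unfold rpow; destruct (Rle_dec x 0); [lra|auto]. Qed.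

Lemma rpow_nonpos x y : x <= 0 -> rpow x y = 0.
Proof. intros H; unfold rpow; destruct (Rle_dec x 0); [auto|lra]. Qed.

Lemma rpow_ge0 x y : 0 <= rpow x y.
Proof. unfold rpow; destruct (Rle_dec x 0); [lra|left; apply exp_pos]. Qed.

Lemma rpow_gt0 x y : 0 < x -> 0 < rpow x y.
Proof. intros H; rewrite rpow_pos by auto; apply exp_pos. Qed.

Lemma rpow_1 x : 0 <= x -> rpow x 1 = x.
Proof.
  intros Hx; destruct (Rle_lt_or_eq_dec _ _ Hx) as [Hx'|<-]; [|now rewrite rpow_nonpos by lra].
  rewrite rpow_pos by auto; now apply Rpower_1.
Qed.

Lemma rpow_base_1 t : rpow 1 t = 1.
Proof. rewrite rpow_pos by lra; unfold Rpower; now rewrite ln_1, Rmult_0_r, exp_0. Qed.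

Lemma rpow_mult x y z : 0 <= x -> 0 <= y -> rpow (x * y) z = rpow x z * rpow y z.
Proof.
  intros Hx Hy.
  destruct (Rle_lt_or_eq_dec _ _ Hx) as [Hx'|<-];
    [|rewrite Rmult_0_l, rpow_nonpos by lra; ring].
  destruct (Rle_lt_or_eq_dec _ _ Hy) as [Hy'|<-];
    [|rewrite Rmult_0_r, !(rpow_nonpos 0) by lra; ring].
  rewrite !rpow_pos by nra; symmetry; now apply Rpower_mult_distr.
Qed.

Lemma rpow_rpow x y z : 0 <= x -> rpow (rpow x y) z = rpow x (y * z).
Proof.
  intros Hx; destruct (Rle_lt_or_eq_dec _ _ Hx) as [Hx'|<-];
    [|now rewrite (rpow_nonpos 0 y), !rpow_nonpos by lra].
  rewrite (rpow_pos x y), rpow_pos, rpow_pos by (auto; apply exp_pos).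
  apply Rpower_mult.
Qed.

Lemma rpow_plus x a b : 0 < x -> rpow x (a + b) = rpow x a * rpow x b.
Proof. intros H; rewrite !rpow_pos by auto; apply Rpower_plus. Qed.

Lemma rpow_inv x p : 0 < x -> rpow (/ x) p = / rpow x p.
Proof.
  intros Hx; rewrite !rpow_pos by (auto; now apply Rinv_0_lt_compat).
  unfold Rpower; rewrite ln_Rinv, <- exp_Ropp by auto; f_equal; ring.
Qed.

Lemma rpow_exp a y : rpow (exp a) y = exp (y * a).
Proof. rewrite rpow_pos by apply exp_pos; unfold Rpower; now rewrite ln_exp. Qed.

(* Natural exponents [n >= 1] agree with [pow], including at the base 0. *)
Lemma rpow_pow x n : 0 <= x -> (1 <= n)%nat -> rpow x (INR n) = x ^ n.
Proof.
  intros Hx Hn; destruct (Rle_lt_or_eq_dec _ _ Hx) as [Hx'|<-].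
  - rewrite rpow_pos by auto; now apply Rpower_pow.
  - rewrite rpow_nonpos by lra; destruct n; [lia|simpl; ring].
Qed.

Lemma rpow_le_base x y z : 0 <= x <= y -> 0 <= z -> rpow x z <= rpow y z.
Proof.
  intros [Hx Hxy] Hz; destruct (Rle_lt_or_eq_dec _ _ Hx) as [Hx'|<-];
    [|rewrite rpow_nonpos by lra; apply rpow_ge0].
  rewrite !rpow_pos by lra; now apply Rle_Rpower_l.
Qed.

Lemma rpow_le_exponent x a b : 1 <= x -> a <= b -> rpow x a <= rpow x b.
Proof. intros H Hab; rewrite !rpow_pos by lra; now apply Rle_Rpower. Qed.

Lemma rpow_ge_self y t : 0 < y <= 1 -> 0 <= t <= 1 -> y <= rpow y t.
Proof.
  intros Hy Ht; rewrite rpow_pos by lra; unfold Rpower.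
  rewrite <- (exp_ln y) at 1 by lra; apply exp_mono.
  assert (ln y <= 0) by (rewrite <- ln_1; apply ln_le; lra).
  nra.
Qed.

Section ListSums.
Context {A : Type}.
Implicit Types (l : list A) (f g : A -> R) (F : A -> C).

Lemma rsum_ext_in l f g : (forall x, In x l -> f x = g x) -> rsum l f = rsum l g.
Proof. intros H; unfold rsum; f_equal; now apply map_ext_in. Qed.

Lemma rsum_app l1 l2 f : rsum (l1 ++ l2) f = rsum l1 f + rsum l2 f.
Proof. induction l1; unfold rsum in *; simpl; [ring|rewrite IHl1; ring]. Qed.

Lemma rsum_scal l f c : rsum l (fun x => c * f x) = c * rsum l f.
Proof. induction l; unfold rsum in *; simpl; [ring|rewrite IHl; ring]. Qed.

Lemma rsum_plus l f g : rsum l (fun x => f x + g x) = rsum l f + rsum l g.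
Proof. induction l; unfold rsum in *; simpl; [ring|rewrite IHl; ring]. Qed.

Lemma rsum_le l f g : (forall x, In x l -> f x <= g x) -> rsum l f <= rsum l g.
Proof.
  induction l; unfold rsum in *; simpl; intros H; [lra|].
  apply Rplus_le_compat; auto.
Qed.

Lemma rsum_ge0 l f : (forall x, In x l -> 0 <= f x) -> 0 <= rsum l f.
Proof.
  induction l; unfold rsum in *; simpl; intros H; [lra|].
  apply Rplus_le_le_0_compat; auto.
Qed.

Lemma rsum_eq0 l f : (forall x, In x l -> 0 <= f x) -> rsum l f = 0 ->
  forall x, In x l -> f x = 0.
Proof.
  induction l as [|a l IH]; unfold rsum in *; simpl; intros H E x Hx; [contradiction|].
  assert (0 <= f a) by auto.
  assert (0 <= fold_right Rplus 0 (map f l)) by (apply (rsum_ge0 l f); auto).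
  destruct Hx as [<-|Hx]; [lra|apply IH; auto; lra].
Qed.

Lemma rprod_ge0 l f : (forall x, In x l -> 0 <= f x) -> 0 <= rprod l f.
Proof.
  induction l; unfold rprod in *; simpl; intros H; [lra|].
  apply Rmult_le_pos; auto.
Qed.

Lemma rprod_le l f g : (forall x, In x l -> 0 <= f x <= g x) -> rprod l f <= rprod l g.
Proof.
  induction l; unfold rprod in *; simpl; intros H; [lra|].
  apply Rmult_le_compat; try apply H; auto.
  apply rprod_ge0; intros; apply H; auto.
Qed.

Lemma rprod_mult l f g : rprod l (fun x => f x * g x) = rprod l f * rprod l g.
Proof. induction l; unfold rprod in *; cbn [map fold_right]; [ring|rewrite IHl; ring]. Qed.

Lemma rprod_exp l f : rprod l (fun x => exp (f x)) = exp (rsum l f).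
Proof.
  induction l; unfold rprod, rsum in *; simpl; [now rewrite exp_0|].
  now rewrite IHl, exp_plus.
Qed.

Lemma rprod_pow2 l f : rprod l (fun x => f x ^ 2) = rprod l f ^ 2.
Proof. induction l; unfold rprod in *; cbn [map fold_right]; [ring|rewrite IHl; ring]. Qed.

Lemma rprod_rpow l f t : (forall x, In x l -> 0 <= f x) ->
  rprod l (fun x => rpow (f x) t) = rpow (rprod l f) t.
Proof.
  induction l; unfold rprod in *; simpl; intros H; [now rewrite rpow_base_1|].
  rewrite IHl, rpow_mult; auto; apply (rprod_ge0 l f); auto.
Qed.

Lemma Cmod_cprod l F : Cmod (cprod l F) = rprod l (fun x => Cmod (F x)).
Proof.
  induction l; unfold cprod, rprod in *; simpl; [apply Cmod_1|].
  now rewrite Cmod_mult, IHl.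
Qed.

Lemma Cmod_csum_le l F : Cmod (csum l F) <= rsum l (fun x => Cmod (F x)).
Proof.
  induction l; unfold csum, rsum in *; simpl; [rewrite Cmod_0; lra|].
  eapply Rle_trans; [apply Cmod_triangle|lra].
Qed.

Lemma csum_app l1 l2 F : csum (l1 ++ l2) F = Cplus (csum l1 F) (csum l2 F).
Proof. induction l1 as [|x l1 IH]; unfold csum in *; simpl; [ring|rewrite IH; ring]. Qed.

Lemma csum_conj l F : csum l (fun x => Cconj (F x)) = Cconj (csum l F).
Proof.
  induction l as [|a l IH]; unfold csum in *; simpl.
  - unfold Cconj, RtoC; simpl; f_equal; ring.
  - now rewrite IH, Cplus_conj.
Qed.

End ListSums.

(** * Young's and Hölder's inequalities for weighted finite sums *)

Lemma exp_convex t x y : 0 <= t <= 1 ->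
  exp (t * x + (1 - t) * y) <= t * exp x + (1 - t) * exp y.
Proof.
  intros Ht; set (m := t * x + (1 - t) * y).
  (* tangent line of [exp] at [m] *)
  assert (Htan : forall z, exp m * (1 + (z - m)) <= exp z).
  { intros z; replace (exp z) with (exp m * exp (z - m)) by (rewrite <- exp_plus; f_equal; ring).
    apply Rmult_le_compat_l; [left; apply exp_pos|apply exp_ineq1_le]. }
  generalize (Htan x) (Htan y); intros Hx Hy.
  assert (t * (exp m * (1 + (x - m))) <= t * exp x) by (apply Rmult_le_compat_l; lra).
  assert ((1 - t) * (exp m * (1 + (y - m))) <= (1 - t) * exp y) by (apply Rmult_le_compat_l; lra).
  assert (t * (exp m * (1 + (x - m))) + (1 - t) * (exp m * (1 + (y - m))) = exp m)
    by (unfold m; ring).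
  lra.
Qed.

Lemma young a b p q : 1 < p -> 1 < q -> 1 / p + 1 / q = 1 -> 0 <= a -> 0 <= b ->
  a * b <= rpow a p / p + rpow b q / q.
Proof.
  intros Hp Hq Hpq Ha Hb.
  assert (0 <= rpow a p / p) by (apply Rmult_le_pos; [apply rpow_ge0|left; apply Rinv_0_lt_compat; lra]).
  assert (0 <= rpow b q / q) by (apply Rmult_le_pos; [apply rpow_ge0|left; apply Rinv_0_lt_compat; lra]).
  destruct (Rle_lt_or_eq_dec _ _ Ha) as [Ha'|<-]; [|lra].
  destruct (Rle_lt_or_eq_dec _ _ Hb) as [Hb'|<-]; [|lra].
  rewrite !rpow_pos by auto; unfold Rpower.
  (* [ab = exp (1/p * (p ln a) + 1/q * (q ln b))], then convexity of [exp] *)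
  replace (a * b) with (exp ((1 / p) * (p * ln a) + (1 - 1 / p) * (q * ln b))).
  2:{ replace (1 - 1 / p) with (1 / q) by lra; rewrite exp_plus.
      replace (1 / p * (p * ln a)) with (ln a) by (field; lra).
      replace (1 / q * (q * ln b)) with (ln b) by (field; lra).
      now rewrite !exp_ln. }
  eapply Rle_trans; [apply exp_convex|].
  - assert (0 < 1 / p) by (apply Rdiv_lt_0_compat; lra).
    assert (0 < 1 / q) by (apply Rdiv_lt_0_compat; lra). lra.
  - replace (1 - 1 / p) with (1 / q) by lra; unfold Rdiv; lra.
Qed.

Section Holder.
Context {A : Type}.
Variables (l : list A) (w : A -> R).
Hypothesis w_ge0 : forall x, In x l -> 0 <= w x.

Lemma weighted_rpow_sum_ge0 (f : A -> R) p : 0 <= rsum l (fun x => w x * rpow (f x) p).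
Proof. apply rsum_ge0; intros x Hx; apply Rmult_le_pos; [auto|apply rpow_ge0]. Qed.

Lemma weighted_rpow_sum_eq0 (f : A -> R) p :
  (forall x, In x l -> 0 <= f x) -> rsum l (fun x => w x * rpow (f x) p) = 0 ->
  forall x, In x l -> w x * f x = 0.
Proof.
  intros Hf E x Hx.
  assert (Ex : w x * rpow (f x) p = 0).
  { apply (rsum_eq0 l (fun x => w x * rpow (f x) p)); auto.
    intros y Hy; apply Rmult_le_pos; [auto|apply rpow_ge0]. }
  destruct (Rle_lt_or_eq_dec _ _ (w_ge0 x Hx)) as [Hw|<-]; [|ring].
  destruct (Rle_lt_or_eq_dec _ _ (Hf x Hx)) as [Hfx|<-]; [|ring].
  generalize (rpow_gt0 (f x) p Hfx); nra.
Qed.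

Lemma weighted_rpow_sum_scale (f : A -> R) p a : 0 < a -> (forall x, In x l -> 0 <= f x) ->
  rsum l (fun x => w x * rpow (f x * / a) p) = / rpow a p * rsum l (fun x => w x * rpow (f x) p).
Proof.
  intros Ha Hf; rewrite <- rsum_scal; apply rsum_ext_in; intros x Hx.
  rewrite rpow_mult, rpow_inv by (auto; left; now apply Rinv_0_lt_compat); ring.
Qed.

Variables (p q : R).
Hypotheses (Hp : 1 < p) (Hq : 1 < q) (Hpq : 1 / p + 1 / q = 1).

Lemma holder_normalized (f g : A -> R) :
  (forall x, In x l -> 0 <= f x /\ 0 <= g x) ->
  rsum l (fun x => w x * rpow (f x) p) = 1 -> rsum l (fun x => w x * rpow (g x) q) = 1 ->
  rsum l (fun x => w x * (f x * g x)) <= 1.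
Proof.
  intros Hfg Sf Sg.
  apply Rle_trans with
    (rsum l (fun x => / p * (w x * rpow (f x) p) + / q * (w x * rpow (g x) q))).
  - apply rsum_le; intros x Hx; destruct (Hfg x Hx) as [Hf Hg].
    replace (/ p * (w x * rpow (f x) p) + / q * (w x * rpow (g x) q))
      with (w x * (rpow (f x) p / p + rpow (g x) q / q)) by (unfold Rdiv; ring).
    apply Rmult_le_compat_l; [auto|now apply young].
  - rewrite rsum_plus, !rsum_scal, Sf, Sg; unfold Rdiv in Hpq; lra.
Qed.

Lemma holder (f g : A -> R) :
  (forall x, In x l -> 0 <= f x /\ 0 <= g x) ->
  rsum l (fun x => w x * (f x * g x)) <=
  rpow (rsum l (fun x => w x * rpow (f x) p)) (1 / p) *
  rpow (rsum l (fun x => w x * rpow (g x) q)) (1 / q).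
Proof.
  intros Hfg.
  set (S := rsum l (fun x => w x * rpow (f x) p)).
  set (U := rsum l (fun x => w x * rpow (g x) q)).
  assert (HS0 : 0 <= S) by apply weighted_rpow_sum_ge0.
  assert (HU0 : 0 <= U) by apply weighted_rpow_sum_ge0.
  assert (0 <= rpow S (1 / p) * rpow U (1 / q)) by (apply Rmult_le_pos; apply rpow_ge0).
  (* degenerate cases: one of the two sums vanishes, and so does the left side *)
  destruct (Rle_lt_or_eq_dec _ _ HS0) as [HS|HS].
  2:{ rewrite (rsum_ext_in l _ (fun x => (w x * f x) * g x)) by (intros; ring).
      rewrite (rsum_ext_in l _ (fun x => 0 * g x)), rsum_scal; [lra|].
      intros x Hx; rewrite (weighted_rpow_sum_eq0 f p); auto; apply Hfg; auto. }
  destruct (Rle_lt_or_eq_dec _ _ HU0) as [HU|HU].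
  2:{ rewrite (rsum_ext_in l _ (fun x => (w x * g x) * f x)) by (intros; ring).
      rewrite (rsum_ext_in l _ (fun x => 0 * f x)), rsum_scal; [lra|].
      intros x Hx; rewrite (weighted_rpow_sum_eq0 g q); auto; apply Hfg; auto. }
  (* main case: normalize [f] and [g] by the p- and q-norms *)
  set (a := rpow S (1 / p)); set (b := rpow U (1 / q)).
  assert (Ha : 0 < a) by (now apply rpow_gt0).
  assert (Hb : 0 < b) by (now apply rpow_gt0).
  assert (Hap : rpow a p = S).
  { unfold a; rewrite rpow_rpow by lra; replace (1 / p * p) with 1 by (field; lra); now apply rpow_1. }
  assert (Hbq : rpow b q = U).
  { unfold b; rewrite rpow_rpow by lra; replace (1 / q * q) with 1 by (field; lra); now apply rpow_1. }
  assert (Hnorm := holder_normalized (fun x => f x * / a) (fun x => g x * / b)).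
  cbv beta in Hnorm; rewrite !weighted_rpow_sum_scale, Hap, Hbq in Hnorm by (auto; intros; now apply Hfg).
  fold S U in Hnorm; rewrite !Rinv_l in Hnorm by lra.
  assert (Hle : rsum l (fun x => w x * (f x * / a * (g x * / b))) <= 1).
  { apply Hnorm; auto; intros x Hx; destruct (Hfg x Hx);
      split; apply Rmult_le_pos; auto; left; now apply Rinv_0_lt_compat. }
  rewrite (rsum_ext_in l _ (fun x => / (a * b) * (w x * (f x * g x)))), rsum_scal in Hle
    by (intros; field; lra).
  fold a b; apply (Rmult_le_reg_l (/ (a * b))); [apply Rinv_0_lt_compat; nra|].
  rewrite Rinv_l by nra; lra.
Qed.

End Holder.

Lemma holder_power {A} (l : list A) (w g h : A -> R) (p2 p3 s : R) :
  0 < s < p2 -> s < p3 -> s / p2 + s / p3 = 1 ->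
  (forall x, In x l -> 0 <= w x /\ 0 <= g x /\ 0 <= h x) ->
  rsum l (fun x => w x * rpow (g x * h x) s) <=
  rpow (rsum l (fun x => w x * rpow (g x) p2)) (s / p2) *
  rpow (rsum l (fun x => w x * rpow (h x) p3)) (s / p3).
Proof.
  intros [Hs Hs2] Hs3 Hsum H.
  assert (HP : 1 < p2 / s) by (apply (Rmult_lt_reg_r s); [lra|]; unfold Rdiv;
    rewrite Rmult_assoc, Rinv_l; lra).
  assert (HQ : 1 < p3 / s) by (apply (Rmult_lt_reg_r s); [lra|]; unfold Rdiv;
    rewrite Rmult_assoc, Rinv_l; lra).
  assert (Hpow : forall u t, 0 <= u -> 0 < t -> rpow (rpow u s) (t / s) = rpow u t).
  { intros u t Hu Ht; rewrite rpow_rpow by auto; f_equal; field; lra. }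
  rewrite (rsum_ext_in l _ (fun x => w x * (rpow (g x) s * rpow (h x) s)))
    by (intros x Hx; destruct (H x Hx) as [? [? ?]]; now rewrite rpow_mult).
  eapply Rle_trans.
  - apply (holder l w (fun x Hx => proj1 (H x Hx)) (p2 / s) (p3 / s)); auto.
    + replace (1 / (p2 / s) + 1 / (p3 / s)) with (s / p2 + s / p3) by (field; lra); lra.
    + intros x Hx; split; apply rpow_ge0.
  - cbv beta; rewrite (rsum_ext_in l (fun x => w x * rpow (rpow (g x) s) (p2 / s))
              (fun x => w x * rpow (g x) p2))
      by (intros x Hx; destruct (H x Hx) as [? [? ?]]; rewrite Hpow; auto; lra).
    rewrite (rsum_ext_in l (fun x => w x * rpow (rpow (h x) s) (p3 / s))
              (fun x => w x * rpow (h x) p3))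
      by (intros x Hx; destruct (H x Hx) as [? [? ?]]; rewrite Hpow; auto; lra).
    replace (1 / (p2 / s)) with (s / p2) by (field; lra).
    replace (1 / (p3 / s)) with (s / p3) by (field; lra); lra.
Qed.

Lemma holder3 {A} (l : list A) (w f g h : A -> R) (p1 p2 p3 : R) :
  1 < p1 -> 1 < p2 -> 1 < p3 -> 1 / p1 + 1 / p2 + 1 / p3 = 1 ->
  (forall x, In x l -> 0 <= w x /\ 0 <= f x /\ 0 <= g x /\ 0 <= h x) ->
  rsum l (fun x => w x * (f x * g x * h x)) <=
  rpow (rsum l (fun x => w x * rpow (f x) p1)) (1 / p1) *
  rpow (rsum l (fun x => w x * rpow (g x) p2)) (1 / p2) *
  rpow (rsum l (fun x => w x * rpow (h x) p3)) (1 / p3).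
Proof.
  intros H1 H2 H3 Hsum H.
  (* [s] is the exponent conjugate to [p1]: [1/s = 1/p2 + 1/p3] *)
  set (s := / (1 / p2 + 1 / p3)).
  assert (Ht : 0 < 1 / p2 + 1 / p3 < 1)
    by (generalize (Rdiv_lt_0_compat 1 p1) (Rdiv_lt_0_compat 1 p2) (Rdiv_lt_0_compat 1 p3); lra).
  assert (Hs1 : 1 < s) by (unfold s; rewrite <- Rinv_1; apply Rinv_lt_contravar; lra).
  assert (Hs2 : s < p2).
  { unfold s; replace p2 with (/ (1 / p2)) at 2 by (field; lra).
    apply Rinv_lt_contravar; [apply Rmult_lt_0_compat|]; try lra.
    apply Rdiv_lt_0_compat; lra. generalize (Rdiv_lt_0_compat 1 p3); lra. }
  assert (Hs3 : s < p3).
  { unfold s; replace p3 with (/ (1 / p3)) at 2 by (field; lra).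
    apply Rinv_lt_contravar; [apply Rmult_lt_0_compat|]; try lra.
    apply Rdiv_lt_0_compat; lra. generalize (Rdiv_lt_0_compat 1 p2); lra. }
  rewrite (rsum_ext_in l _ (fun x => w x * (f x * (g x * h x)))) by (intros; ring).
  eapply Rle_trans.
  { apply (holder l w (fun x Hx => proj1 (H x Hx)) p1 s); auto.
    - replace (1 / s) with (1 / p2 + 1 / p3) by (unfold s; field; lra); lra.
    - intros x Hx; destruct (H x Hx) as [? [? [? ?]]]; split; [|apply Rmult_le_pos]; auto. }
  rewrite Rmult_assoc; apply Rmult_le_compat_l; [apply rpow_ge0|].
  cbv beta; eapply Rle_trans.
  { apply rpow_le_base; [split; [apply weighted_rpow_sum_ge0|]|].
    - intros x Hx; now apply H.
    - apply (holder_power l w g h p2 p3 s); [lra|lra| |].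
      + unfold s; field; split; lra.
      + intros x Hx; destruct (H x Hx) as [? [? [? ?]]]; auto.
    - left; apply Rdiv_lt_0_compat; lra. }
  rewrite rpow_mult, !rpow_rpow by (apply weighted_rpow_sum_ge0 || apply rpow_ge0;
    intros x Hx; now apply H).
  replace (s / p2 * (1 / s)) with (1 / p2) by (field; lra).
  replace (s / p3 * (1 / s)) with (1 / p3) by (field; lra); lra.
Qed.

(** * The truncated exponential [E_n(w) = sum_{i<=n} w^i/i!] *)

Definition texp (n : nat) (w : C) : C :=
  csum (seq 0 (S n)) (fun i => Cdiv (Cpown w i) (RtoC (INR (fact i)))).

Definition texp_err (n : nat) (w : C) : R :=
  2 * exp (Cmod w) * Cmod w ^ S n / INR (fact n).

Lemma texp_err_ge0 n w : 0 <= texp_err n w.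
Proof.
  unfold texp_err; apply Rmult_le_pos; [|left; apply Rinv_0_lt_compat, fact_pos].
  apply Rmult_le_pos; [generalize (exp_pos (Cmod w)); lra|apply pow_le, Cmod_ge_0].
Qed.

Lemma Cmod_Cpown w n : Cmod (Cpown w n) = Cmod w ^ n.
Proof. induction n; simpl; [apply Cmod_1|now rewrite Cmod_mult, IHn]. Qed.

Lemma Cmod_div_R z r : r <> 0 -> Cmod (Cdiv z (RtoC r)) = Cmod z / Rabs r.
Proof.
  intros H; rewrite Cmod_div, Cmod_R; [reflexivity|].
  intro E; apply H; now injection E.
Qed.

Lemma Cmod_scal a z : Cmod (Cmult (RtoC a) z) = Rabs a * Cmod z.
Proof. now rewrite Cmod_mult, Cmod_R. Qed.

Lemma csum_seq_re_im (f : nat -> C) n :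
  Re (csum (seq 0 (S n)) f) = sum_f_R0 (fun i => Re (f i)) n /\
  Im (csum (seq 0 (S n)) f) = sum_f_R0 (fun i => Im (f i)) n.
Proof.
  induction n as [|n [IHr IHi]]; [unfold csum, Re, Im; simpl; split; ring|].
  rewrite seq_S, csum_app; cbn [sum_f_R0]; rewrite <- IHr, <- IHi.
  unfold csum, Re, Im; simpl; split; ring.
Qed.

Lemma Cdiv_RtoC_re_im z r : r <> 0 ->
  Re (Cdiv z (RtoC r)) = Re z / r /\ Im (Cdiv z (RtoC r)) = Im z / r.
Proof.
  intros H; destruct z as [a b]; unfold Cdiv, Cinv, Cmult, RtoC, Re, Im; simpl.
  split; field; auto.
Qed.

(** Writing [tpoly c n t = sum_{i<=n} t^i c_i / i!] for real coefficients [c], the real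
   and imaginary parts of [E_n(tw)] are [tpoly] of the real and imaginary parts of the
   powers [w^i].  The function [t |-> e^{-tw} E_n(tw)] equals 1 at [t = 0] and has
   derivative [-e^{-tw} t^n w^(n+1) / n!]; the mean value theorem, applied to its real
   and imaginary parts separately, bounds [e^{-w} E_n(w) - 1] by [texp_err n w]. *)

Definition tpoly (c : nat -> R) (n : nat) (t : R) : R :=
  sum_f_R0 (fun i => t ^ i * c i / INR (fact i)) n.

Lemma is_derive_value (f : R -> R) (x l l' : R) : is_derive f x l -> l = l' -> is_derive f x l'.
Proof. now intros H <-. Qed.

Lemma is_derive_mult_R (f g : R -> R) x df dg :
  is_derive f x df -> is_derive g x dg ->
  is_derive (fun t => f t * g t) x (df * g x + f x * dg).
Proof. intros Hf Hg; apply (is_derive_mult f g x df dg Hf Hg); intros; apply Rmult_comm. Qed.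

Lemma is_derive_plus_R (f g : R -> R) x df dg :
  is_derive f x df -> is_derive g x dg -> is_derive (fun t => f t + g t) x (df + dg).
Proof. intros Hf Hg; apply (is_derive_plus f g x df dg Hf Hg). Qed.

Lemma is_derive_minus_R (f g : R -> R) x df dg :
  is_derive f x df -> is_derive g x dg -> is_derive (fun t => f t - g t) x (df - dg).
Proof. intros Hf Hg; apply (is_derive_minus f g x df dg Hf Hg). Qed.

Lemma is_derive_pow_const m (a t : R) : is_derive (fun t => t ^ m * a) t (INR m * t ^ pred m * a).
Proof. auto_derive; auto; ring. Qed.

(* Goals produced by Coquelicot's derivative lemmas state equalities in the carrier of
   [R_AbsRing]; [ring]/[field] need them restated over [R]. *)
Ltac real_eq := match goal with |- @eq _ ?a ?b => change (@eq R a b) end.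

Lemma tpoly_derive c n t :
  is_derive (tpoly c n) t (tpoly (fun i => c (S i)) n t - t ^ n * c (S n) / INR (fact n)).
Proof.
  induction n as [|n IH].
  - unfold tpoly; simpl; auto_derive; auto; field.
  - apply (is_derive_ext (fun t => tpoly c n t + t ^ S n * (c (S n) / INR (fact (S n))))).
    { intros u; unfold tpoly; cbn [sum_f_R0]; real_eq; unfold Rdiv; ring. }
    eapply is_derive_value; [apply is_derive_plus_R; [exact IH|apply is_derive_pow_const]|].
    unfold tpoly; cbn [sum_f_R0 pred]; rewrite fact_simpl, mult_INR.
    assert (INR (fact n) <> 0) by apply Rgt_not_eq, fact_pos.
    assert (INR (S n) <> 0) by (apply not_0_INR; lia).
    simpl pow; field; auto.
Qed.

Lemma tpoly_at_0 c n : tpoly c n 0 = c 0%nat.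
Proof.
  induction n as [|n IH]; unfold tpoly in *; cbn [sum_f_R0]; [simpl; field|].
  rewrite IH; simpl; unfold Rdiv; ring.
Qed.

Lemma Rabs_trig_comb a b u v : Rabs u <= 1 -> Rabs v <= 1 ->
  Rabs (a * u + b * v) <= Rabs a + Rabs b.
Proof.
  intros Hu Hv; eapply Rle_trans; [apply Rabs_triang|]; rewrite !Rabs_mult.
  generalize (Rabs_pos a) (Rabs_pos b); nra.
Qed.

Lemma mvt_unit (f df : R -> R) B :
  (forall t, is_derive f t (df t)) -> (forall c, Rabs c <= 1 -> Rabs (df c) <= B) ->
  Rabs (f 1 - f 0) <= B.
Proof.
  intros Hd HB.
  destruct (MVT_cor4 f df 0 1 (fun c _ => Hd c) 1) as [c [Hc Hc2]];
    [rewrite Rminus_0_r, Rabs_R1; lra|].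
  rewrite Hc, Rminus_0_r, Rmult_1_r; apply HB.
  now rewrite Rminus_0_r, Rminus_0_r, Rabs_R1 in Hc2.
Qed.

Section TaylorRemainder.
Variable w : C.

Definition pow_re (i : nat) : R := Re (Cpown w i).
Definition pow_im (i : nat) : R := Im (Cpown w i).

Lemma pow_re_im_bound i : Rabs (pow_re i) <= Cmod w ^ i /\ Rabs (pow_im i) <= Cmod w ^ i.
Proof.
  rewrite <- Cmod_Cpown; generalize (Rmax_Cmod (Cpown w i)).
  unfold pow_re, pow_im, Re, Im; generalize (Rmax_l (Rabs (fst (Cpown w i))) (Rabs (snd (Cpown w i))))
    (Rmax_r (Rabs (fst (Cpown w i))) (Rabs (snd (Cpown w i)))); lra.
Qed.

Lemma tpoly_shift n t :
  tpoly (fun i => pow_re (S i)) n t = Re w * tpoly pow_re n t - Im w * tpoly pow_im n t /\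
  tpoly (fun i => pow_im (S i)) n t = Re w * tpoly pow_im n t + Im w * tpoly pow_re n t.
Proof.
  induction n as [|n [IHr IHi]]; unfold tpoly in *; cbn [sum_f_R0];
    [|rewrite IHr, IHi]; unfold pow_re, pow_im, Re, Im; simpl; split; unfold Rdiv; ring.
Qed.

(* Real and imaginary parts of [e^{-tw} E_n(tw)]. *)
Definition rem_re (n : nat) (t : R) : R :=
  exp (- (t * Re w)) * (tpoly pow_re n t * cos (t * Im w) + tpoly pow_im n t * sin (t * Im w)).
Definition rem_im (n : nat) (t : R) : R :=
  exp (- (t * Re w)) * (tpoly pow_im n t * cos (t * Im w) - tpoly pow_re n t * sin (t * Im w)).

Lemma rem_derive n t :
  is_derive (rem_re n) t (- exp (- (t * Re w)) * (t ^ n / INR (fact n)) *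
    (pow_re (S n) * cos (t * Im w) + pow_im (S n) * sin (t * Im w))) /\
  is_derive (rem_im n) t (- exp (- (t * Re w)) * (t ^ n / INR (fact n)) *
    (pow_im (S n) * cos (t * Im w) - pow_re (S n) * sin (t * Im w))).
Proof.
  destruct (tpoly_shift n t) as [Er Ei].
  assert (HF := tpoly_derive pow_re n t); rewrite Er in HF.
  assert (HG := tpoly_derive pow_im n t); rewrite Ei in HG.
  assert (HE : is_derive (fun t => exp (- (t * Re w))) t (- Re w * exp (- (t * Re w))))
    by (auto_derive; auto; ring).
  assert (HC : is_derive (fun t => cos (t * Im w)) t (- Im w * sin (t * Im w)))
    by (auto_derive; auto; ring).
  assert (HS : is_derive (fun t => sin (t * Im w)) t (Im w * cos (t * Im w)))
    by (auto_derive; auto; ring).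
  assert (INR (fact n) <> 0) by apply Rgt_not_eq, fact_pos.
  split; (eapply is_derive_value; [apply is_derive_mult_R; [exact HE|]|]).
  - apply is_derive_plus_R; apply is_derive_mult_R; eauto.
  - real_eq; cbv beta; field; auto.
  - apply is_derive_minus_R; apply is_derive_mult_R; eauto.
  - real_eq; cbv beta; field; auto.
Qed.

Lemma rem_derive_bound n c X : Rabs c <= 1 -> Rabs X <= 2 * Cmod w ^ S n ->
  Rabs (- exp (- (c * Re w)) * (c ^ n / INR (fact n)) * X) <= texp_err n w.
Proof.
  intros Hc HX; unfold texp_err.
  assert (Hf := fact_pos n).
  rewrite !Rabs_mult, Rabs_Ropp, Rabs_pos_eq by (left; apply exp_pos).
  unfold Rdiv; rewrite Rabs_mult, (Rabs_pos_eq (/ _)), <- RPow_abs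
    by (left; now apply Rinv_0_lt_compat).
  assert (He : exp (- (c * Re w)) <= exp (Cmod w)).
  { apply exp_mono; generalize (Rmax_Cmod w) (Rmax_l (Rabs (fst w)) (Rabs (snd w)));
      intros; unfold Re; assert (Rabs (c * fst w) <= Cmod w)
      by (rewrite Rabs_mult; generalize (Rabs_pos c) (Rabs_pos (fst w)); nra).
    apply Rabs_le_between in H1; lra. }
  assert (Hcn : Rabs c ^ n <= 1) by (rewrite <- (pow1 n); apply pow_incr; split; [apply Rabs_pos|lra]).
  assert (0 <= Rabs c ^ n) by (apply pow_le, Rabs_pos).
  assert (0 < / INR (fact n)) by (now apply Rinv_0_lt_compat).
  assert (0 <= Rabs X) by apply Rabs_pos.
  assert (0 < exp (- (c * Re w))) by apply exp_pos.
  replace (2 * exp (Cmod w) * Cmod w ^ S n * / INR (fact n))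
    with (exp (Cmod w) * (1 * / INR (fact n)) * (2 * Cmod w ^ S n)) by ring.
  apply Rmult_le_compat; try apply Rmult_le_pos; try nra.
  apply Rmult_le_compat; nra.
Qed.

Lemma rem_bounds n : Rabs (rem_re n 1 - 1) <= texp_err n w /\ Rabs (rem_im n 1) <= texp_err n w.
Proof.
  destruct (pow_re_im_bound (S n)) as [Ha Hb].
  assert (Hr0 : rem_re n 0 = 1)
    by (unfold rem_re; rewrite !tpoly_at_0, ?Rmult_0_l, ?Ropp_0, ?exp_0, ?cos_0, ?sin_0;
        unfold pow_re, pow_im, Re, Im; simpl; ring).
  assert (Hi0 : rem_im n 0 = 0)
    by (unfold rem_im; rewrite !tpoly_at_0, ?Rmult_0_l, ?Ropp_0, ?exp_0, ?cos_0, ?sin_0;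
        unfold pow_re, pow_im, Re, Im; simpl; ring).
  assert (Hcos : forall x, Rabs (cos x) <= 1) by (intros; apply Rabs_le, COS_bound).
  assert (Hsin : forall x, Rabs (- sin x) <= 1)
    by (intros; rewrite Rabs_Ropp; apply Rabs_le, SIN_bound).
  split.
  - rewrite <- Hr0 at 2; apply mvt_unit with (1 := fun t => proj1 (rem_derive n t)).
    intros c Hc; apply rem_derive_bound; auto.
    eapply Rle_trans; [apply Rabs_trig_comb; [apply Hcos|rewrite <- Rabs_Ropp; apply Hsin]|lra].
  - replace (rem_im n 1) with (rem_im n 1 - rem_im n 0) by (rewrite Hi0; ring).
    apply mvt_unit with (1 := fun t => proj2 (rem_derive n t)).
    intros c Hc; apply rem_derive_bound; auto.
    replace (pow_im (S n) * cos (c * Im w) - pow_re (S n) * sin (c * Im w))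
      with (pow_im (S n) * cos (c * Im w) + pow_re (S n) * - sin (c * Im w)) by ring.
    eapply Rle_trans; [apply Rabs_trig_comb; [apply Hcos|apply Hsin]|lra].
Qed.

Lemma texp_scaled_modulus n :
  (exp (- Re w) * Cmod (texp n w)) ^ 2 = rem_re n 1 ^ 2 + rem_im n 1 ^ 2.
Proof.
  assert (Hparts : Re (texp n w) = tpoly pow_re n 1 /\ Im (texp n w) = tpoly pow_im n 1).
  { unfold texp, tpoly; destruct (csum_seq_re_im (fun i => Cdiv (Cpown w i) (RtoC (INR (fact i)))) n)
      as [-> ->]; split; apply sum_eq; intros i _;
      destruct (Cdiv_RtoC_re_im (Cpown w i) (INR (fact i))) as [Er Ei];
      try apply Rgt_not_eq, fact_pos; rewrite ?Er, ?Ei, pow1, Rmult_1_l; reflexivity. }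
  rewrite Rpow_mult_distr, Cmod2_alt, (proj1 Hparts), (proj2 Hparts).
  unfold rem_re, rem_im; rewrite !Rmult_1_l.
  generalize (sin2_cos2 (Im w)); unfold Rsqr; intros Hsc.
  transitivity (exp (- Re w) ^ 2 * (tpoly pow_re n 1 ^ 2 + tpoly pow_im n 1 ^ 2) *
    (sin (Im w) * sin (Im w) + cos (Im w) * cos (Im w))); [rewrite Hsc; ring|ring].
Qed.

End TaylorRemainder.

Lemma texp_modulus_bounds n w :
  exp (Re w) * (1 - texp_err n w) <= Cmod (texp n w) <=
  exp (Re w) * (1 + 2 * texp_err n w).
Proof.
  destruct (rem_bounds w n) as [Hu Hv]; assert (Hid := texp_scaled_modulus w n).
  assert (Hd := texp_err_ge0 n w); set (d := texp_err n w) in *.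
  assert (Hx : exp (Re w) * exp (- Re w) = 1) by (rewrite <- exp_plus, Rplus_opp_r; apply exp_0).
  assert (HE0 := Cmod_ge_0 (texp n w)).
  set (X := exp (- Re w) * Cmod (texp n w)) in *.
  assert (HX0 : 0 <= X) by (unfold X; generalize (exp_pos (- Re w)); nra).
  replace (Cmod (texp n w)) with (exp (Re w) * X) by (unfold X; rewrite <- Rmult_assoc, Hx; ring).
  apply Rabs_le_between in Hu; apply Rabs_le_between in Hv.
  generalize (exp_pos (Re w)); intros; split; apply Rmult_le_compat_l; try lra.
  - destruct (Rle_dec (1 - d) 0); [lra|nra].
  - nra.
Qed.

(* [(n/e^2)^n / n! <= e^{-n}], from [n^n/n! <= e^n]. *)
Lemma pow_fact_scaled n : (INR n / exp 2) ^ n / INR (fact n) <= exp (- INR n).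
Proof.
  set (m := INR n).
  replace ((m / exp 2) ^ n / INR (fact n)) with ((m ^ n / INR (fact n)) * / exp m * / exp m).
  2:{ unfold Rdiv; rewrite Rpow_mult_distr, pow_inv.
      replace (exp 2 ^ n) with (exp m * exp m)
        by (rewrite exp_pow_n, <- exp_plus; f_equal; unfold m; ring).
      generalize (exp_pos m); intros; field; split; [apply Rgt_not_eq, fact_pos|lra]. }
  assert (Hm := pow_fact_le_exp m n (pos_INR n)); fold m in Hm.
  rewrite exp_Ropp; assert (Hi : exp m * / exp m = 1) by (apply Rinv_r, Rgt_not_eq, exp_pos).
  assert (0 < / exp m) by apply Rinv_0_lt_compat, exp_pos.
  apply Rle_trans with (exp m * / exp m * / exp m); [|rewrite Hi; lra].
  repeat apply Rmult_le_compat_r; lra.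
Qed.

Lemma texp_err_small n w : Cmod w <= INR n / exp 2 -> texp_err n w <= exp (- (INR n / 4)).
Proof.
  intros Hw; set (m := INR n) in *; set (L := m / exp 2) in *.
  assert (Hm : 0 <= m) by apply pos_INR.
  assert (He2 := exp2_bounds); assert (Hf := fact_pos n).
  assert (HL0 : 0 <= L) by (unfold L; apply Rmult_le_pos; [lra|left; apply Rinv_0_lt_compat; lra]).
  assert (HL4 : L <= m / 4) by (unfold L; apply Rmult_le_compat_l; [lra|apply Rinv_le_contravar; lra]).
  assert (Hw0 := Cmod_ge_0 w).
  assert (H1 : texp_err n w <= (2 * exp L * L) * (L ^ n / INR (fact n))).
  { unfold texp_err; simpl pow; unfold Rdiv.
    assert (exp (Cmod w) <= exp L) by (apply exp_mono; lra).
    assert (Cmod w ^ n <= L ^ n) by (apply pow_incr; lra).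
    assert (0 < / INR (fact n)) by (now apply Rinv_0_lt_compat).
    generalize (pow_le (Cmod w) n Hw0) (exp_pos (Cmod w)); intros.
    assert (exp (Cmod w) * (Cmod w * Cmod w ^ n) <= exp L * (L * L ^ n))
      by (apply Rmult_le_compat; try nra; apply Rmult_le_compat; nra).
    nra. }
  assert (H2 : 2 * exp L * L <= exp (m / 2) * exp (m / 4)).
  { assert (exp L <= exp (m / 4)) by (apply exp_mono; lra).
    generalize (exp_ineq1_le (m / 2)) (exp_pos L); intros; nra. }
  assert (H3 := pow_fact_scaled n); fold m L in H3.
  assert (0 <= L ^ n / INR (fact n))
    by (apply Rmult_le_pos; [now apply pow_le|left; now apply Rinv_0_lt_compat]).
  replace (exp (- (m / 4))) with (exp (m / 2) * exp (m / 4) * exp (- m))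
    by (rewrite <- !exp_plus; f_equal; field).
  eapply Rle_trans; [exact H1|].
  apply Rmult_le_compat; auto; generalize (exp_pos L); nra.
Qed.

Lemma texp_triangle n w : Cmod (texp n w) <= sum_f_R0 (fun i => Cmod w ^ i / INR (fact i)) n.
Proof.
  assert (Hterm : forall i, Cmod (Cdiv (Cpown w i) (RtoC (INR (fact i)))) = Cmod w ^ i / INR (fact i))
    by (intros i; rewrite Cmod_div_R, Cmod_Cpown, Rabs_pos_eq
          by (apply Rgt_not_eq, fact_pos || (left; apply fact_pos)); reflexivity).
  induction n as [|n IH].
  - unfold texp, csum; cbn [seq map fold_right sum_f_R0]; rewrite Cplus_0_r, Hterm; lra.
  - unfold texp in *; rewrite seq_S, csum_app; cbn [sum_f_R0].
    eapply Rle_trans; [apply Cmod_triangle|]; apply Rplus_le_compat; [exact IH|].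
    unfold csum; cbn [map fold_right Nat.add]; rewrite Cplus_0_r, Hterm; lra.
Qed.

Lemma texp_crude n w : (1 <= n)%nat ->
  Cmod (texp n w) <= exp (INR n) * Rmax 1 (Cmod w / INR n) ^ n.
Proof.
  intros Hn; set (M := Rmax 1 (Cmod w / INR n)).
  assert (HM1 : 1 <= M) by apply Rmax_l.
  assert (Hnp : 0 < INR n) by (apply lt_0_INR; lia).
  assert (Hw0 := Cmod_ge_0 w).
  assert (HwM : Cmod w <= M * INR n).
  { assert (Cmod w / INR n <= M) by apply Rmax_r.
    replace (Cmod w) with (Cmod w / INR n * INR n) by (field; lra); nra. }
  eapply Rle_trans; [apply texp_triangle|].
  apply Rle_trans with (sum_f_R0 (fun i => (INR n ^ i / INR (fact i)) * M ^ n) n).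
  - apply sum_Rle; intros i Hi.
    assert (Cmod w ^ i <= M ^ n * INR n ^ i).
    { eapply Rle_trans; [apply pow_incr; split; [exact Hw0|exact HwM]|].
      rewrite Rpow_mult_distr; apply Rmult_le_compat_r; [apply pow_le; lra|].
      apply Rle_pow; auto. }
    unfold Rdiv; replace (INR n ^ i * / INR (fact i) * M ^ n)
      with (M ^ n * INR n ^ i * / INR (fact i)) by ring.
    apply Rmult_le_compat_r; [left; apply Rinv_0_lt_compat, fact_pos|auto].
  - rewrite <- scal_sum, Rmult_comm; apply Rmult_le_compat_r; [apply pow_le; lra|].
    apply exp_ge_taylor; lra.
Qed.

(** * Bounds for a single mollifier factor *)

Lemma texp_small l z a : Rabs a * Cmod z <= INR l / exp 2 ->
  Cmod (texp l (Cmult (RtoC a) z)) <= exp (a * Re z) * (1 + 2 * exp (- (INR l / 4))) /\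
  exp (a * Re z) * (1 - exp (- (INR l / 4))) <= Cmod (texp l (Cmult (RtoC a) z)).
Proof.
  intros Hs; set (w := Cmult (RtoC a) z).
  assert (Hd := texp_err_small l w ltac:(unfold w; now rewrite Cmod_scal)).
  destruct (texp_modulus_bounds l w) as [H1 H2].
  replace (Re w) with (a * Re z) in H1, H2 by (unfold w, Re; destruct z; simpl; ring).
  generalize (exp_pos (a * Re z)); intros; split; fold w.
  - eapply Rle_trans; [exact H2|apply Rmult_le_compat_l; lra].
  - eapply Rle_trans; [|exact H1]; apply Rmult_le_compat_l; lra.
Qed.

Lemma texp_large l z a kap c : (1 <= l)%nat -> Rabs a <= kap -> 64 * kap <= c ->
  INR l / exp 2 < kap * Cmod z ->
  Cmod (texp l (Cmult (RtoC a) z)) <= (c * Cmod z / INR l) ^ l /\ 1 <= c * Cmod z / INR l.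
Proof.
  intros Hl Ha Hc Hlarge.
  assert (Hlp : 0 < INR l) by (apply lt_0_INR; lia).
  assert (He2 := exp2_bounds); assert (He1 := exp1_bounds).
  assert (Hz := Cmod_ge_0 z); assert (Ha0 := Rabs_pos a).
  set (rho := kap * Cmod z / INR l).
  assert (Hrho : 1 / 9 < rho).
  { unfold rho; apply (Rmult_lt_reg_r (INR l)); auto.
    replace (kap * Cmod z / INR l * INR l) with (kap * Cmod z) by (field; lra).
    assert (INR l / 9 <= INR l / exp 2)
      by (apply Rmult_le_compat_l; [lra|apply Rinv_le_contravar; lra]).
    lra. }
  assert (Hkap : 0 <= kap) by lra.
  assert (Hinv : 0 < / INR l) by (now apply Rinv_0_lt_compat).
  assert (Hcz : 64 * rho <= c * Cmod z / INR l).
  { unfold rho, Rdiv; rewrite <- !Rmult_assoc.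
    apply Rmult_le_compat_r; [lra|apply Rmult_le_compat_r; lra]. }
  assert (Haz : Rabs a * Cmod z / INR l <= rho)
    by (unfold rho, Rdiv; apply Rmult_le_compat_r; [lra|apply Rmult_le_compat_r; lra]).
  assert (0 <= Rabs a * Cmod z / INR l) by (unfold Rdiv; apply Rmult_le_pos; nra).
  split; [|lra].
  eapply Rle_trans; [apply texp_crude; auto|].
  replace (exp (INR l)) with (exp 1 ^ l) by (now rewrite exp_pow_n, Rmult_1_r).
  rewrite <- Rpow_mult_distr; apply pow_incr; split.
  - apply Rmult_le_pos; [lra|]; eapply Rle_trans; [|apply Rmax_l]; lra.
  - rewrite Cmod_scal; apply Rmax_case_strong; intros _; nra.
Qed.

Lemma exp_quarter_bounds l : (1 <= l)%nat -> 0 < exp (- (INR l / 4)) <= 4 / 5.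
Proof.
  intros Hl; split; [apply exp_pos|].
  assert (H1 : 1 <= INR l) by (apply (le_INR 1); lia).
  assert (H2 : exp (- (INR l / 4)) <= exp (- (1 / 4))) by (apply exp_mono; lra).
  assert (H3 : 5 / 4 <= exp (1 / 4)) by (generalize (exp_ineq1_le (1 / 4)); lra).
  rewrite (exp_Ropp (1 / 4)) in H2.
  assert (/ exp (1 / 4) <= 4 / 5)
    by (replace (4 / 5) with (/ (5 / 4)) by field; apply Rinv_le_contravar; lra).
  lra.
Qed.

(* The ratio of the upper and lower small-argument bounds: [(1+2d)^2 <= e^{14d} (1-d)^2]. *)
Lemma ratio_bound d : 0 <= d <= 4 / 5 -> (1 + 2 * d) ^ 2 <= exp (14 * d) * (1 - d) ^ 2.
Proof.
  intros Hd.
  assert (Ha : 1 + 2 * d <= exp (2 * d)) by apply exp_ineq1_le.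
  assert (Hb : 1 <= (1 - d) * exp (5 * d))
    by (generalize (exp_ineq1_le (5 * d)); intros; nra).
  replace (exp (14 * d)) with (exp (2 * d) ^ 2 * exp (5 * d) ^ 2)
    by (rewrite !exp_pow_n, <- exp_plus; f_equal; simpl; ring).
  assert ((1 + 2 * d) ^ 2 <= exp (2 * d) ^ 2) by (apply pow_incr; lra).
  assert (1 <= ((1 - d) * exp (5 * d)) ^ 2) by (rewrite <- (pow1 2); apply pow_incr; lra).
  assert (0 <= exp (2 * d) ^ 2) by (apply pow_le; left; apply exp_pos).
  rewrite Rpow_mult_distr in H0; nra.
Qed.

(* The exponent [r_k] is large enough for [Q_j^{2 r_k}] to absorb the large case. *)
Lemma r_k_gt_half k : 1 / 2 < k -> 2 <= INR (2 * r_k k) * ((2 * k - 1) / (2 * k)).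
Proof.
  intros Hk; unfold r_k; destruct (Rle_dec k (1 / 2)) as [E|_]; [lra|].
  rewrite mult_INR, plus_INR; assert (Hc := ceilN_ge (2 * k / (2 * k - 1))).
  assert (Hth : 0 < (2 * k - 1) / (2 * k)) by (apply Rdiv_lt_0_compat; lra).
  assert (2 * k / (2 * k - 1) * ((2 * k - 1) / (2 * k)) = 1) by (field; lra).
  assert (2 * k / (2 * k - 1) * ((2 * k - 1) / (2 * k))
            <= INR (ceilN (2 * k / (2 * k - 1))) * ((2 * k - 1) / (2 * k)))
    by (apply Rmult_le_compat_r; lra).
  simpl; lra.
Qed.

Lemma r_k_le_half k : 0 < k <= 1 / 2 -> 2 + 2 / k <= INR (2 * r_k k).
Proof.
  intros Hk; unfold r_k; destruct (Rle_dec k (1 / 2)) as [_|E]; [|lra].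
  rewrite mult_INR, plus_INR; assert (Hc := ceilN_ge (1 / k)).
  replace (2 / k) with (2 * (1 / k)) by (field; lra); simpl; lra.
Qed.

Lemma r_k_pos k : (1 <= 2 * r_k k)%nat.
Proof. unfold r_k; destruct Rle_dec; lia. Qed.

(* [kap k] bounds both [|k - 1|] and [k]; the constant of [Q_j] exceeds [64 kap k]. *)
Definition kap (k : R) : R := Rmax (Rabs (k - 1)) k.
Definition qconst (k : R) : R := 64 * Rmax 2 (k + 3 / 2).

Lemma kap_facts k : 0 < k ->
  0 < kap k /\ Rabs (k - 1) <= kap k /\ Rabs k <= kap k /\ 64 * kap k <= qconst k.
Proof.
  intros Hk; unfold kap, qconst; rewrite (Rabs_pos_eq k) by lra; repeat split.
  - eapply Rlt_le_trans; [exact Hk|apply Rmax_r].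
  - apply Rmax_l.
  - apply Rmax_r.
  - apply Rmult_le_compat_l; [lra|apply Rmax_lub].
    + eapply Rle_trans; [|apply Rmax_r]; apply Rabs_le; lra.
    + eapply Rle_trans; [|apply Rmax_r]; lra.
Qed.

(** In the small case
   [A B'] and [B^2] have the same main term [e^{(2k-1) Re z}] (resp. [A^2 B'^{2/k}] and
   [B^2] have the main term [e^{2k Re z}]); in the large case [Q] dominates. *)
Section Factor.
Variables (k : R) (l : nat) (z : C).
Hypotheses (Hk : 0 < k) (Hl : (1 <= l)%nat).

Let A := Cmod (texp l (Cmult (RtoC (k - 1)) z)).
Let B := Cmod (texp l (Cmult (RtoC k) z)).
Let B' := Cmod (texp l (Cmult (RtoC k) (Cconj z))).
Let Q := Cmod (Cpown (Cdiv (Cmult (RtoC (qconst k)) z) (RtoC (INR l))) l).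
Let D := B ^ 2 + Q ^ (2 * r_k k).
Let d := exp (- (INR l / 4)).
Let K := exp ((14 + 4 / k) * d).

Lemma Q_eq : Q = (qconst k * Cmod z / INR l) ^ l.
Proof.
  unfold Q; rewrite Cmod_Cpown, Cmod_div_R, Cmod_scal, !Rabs_pos_eq; auto.
  - apply pos_INR.
  - unfold qconst, Rmax; destruct Rle_dec; lra.
  - apply not_0_INR; lia.
Qed.

Lemma factor_facts : 0 <= A /\ 0 <= B' /\ 0 <= Q /\ B ^ 2 <= D /\ Q ^ (2 * r_k k) <= D /\
  0 < d <= 4 / 5 /\ exp (14 * d) <= K /\ 1 <= K.
Proof.
  assert (Hd := exp_quarter_bounds l Hl); fold d in Hd.
  assert (0 < 4 / k) by (apply Rdiv_lt_0_compat; lra).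
  generalize (pow_le B 2 (Cmod_ge_0 _)) (pow_le Q (2 * r_k k) (Cmod_ge_0 _)); intros.
  repeat split; try apply Cmod_ge_0; try (unfold D; lra); try lra.
  - unfold K; apply exp_mono; nra.
  - unfold K; rewrite <- exp_0; apply exp_mono; nra.
Qed.

Lemma small_case : kap k * Cmod z <= INR l / exp 2 ->
  A <= exp ((k - 1) * Re z) * (1 + 2 * d) /\ B' <= exp (k * Re z) * (1 + 2 * d) /\
  exp (k * Re z) * (1 - d) <= B.
Proof.
  intros Hs; destruct (kap_facts k Hk) as [H0 [H1 [H2 H3]]]; assert (Hz := Cmod_ge_0 z).
  assert (Hsm : forall a, Rabs a <= kap k -> Rabs a * Cmod z <= INR l / exp 2)
    by (intros a Ha; eapply Rle_trans; [|exact Hs]; now apply Rmult_le_compat_r).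
  destruct (texp_small l z (k - 1) (Hsm _ H1)) as [Ha _].
  destruct (texp_small l (Cconj z) k ltac:(rewrite Cmod_conj; now apply Hsm)) as [Hb _].
  destruct (texp_small l z k (Hsm _ H2)) as [_ Hc].
  now unfold A, B, B', d.
Qed.

Lemma large_case : INR l / exp 2 < kap k * Cmod z -> A <= Q /\ B' <= Q /\ 1 <= Q.
Proof.
  intros HL; destruct (kap_facts k Hk) as [H0 [H1 [H2 H3]]].
  destruct (texp_large l z (k - 1) (kap k) (qconst k) Hl H1 H3 HL) as [Ha Hq].
  destruct (texp_large l (Cconj z) k (kap k) (qconst k) Hl H2 H3) as [Hb _];
    [now rewrite Cmod_conj|].
  rewrite Cmod_conj in Hb; rewrite Q_eq; unfold A, B'; repeat split; auto.
  rewrite <- (pow1 l); apply pow_incr; lra.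
Qed.

Lemma factor_gt_small : 1 / 2 < k -> kap k * Cmod z <= INR l / exp 2 ->
  A * B' <= K * rpow D ((2 * k - 1) / (2 * k)).
Proof.
  intros Hk2 Hs; set (th := (2 * k - 1) / (2 * k)).
  assert (Hth : 0 < th <= 1).
  { unfold th; split; [apply Rdiv_lt_0_compat; lra|].
    apply (Rmult_le_reg_r (2 * k)); [lra|]; unfold Rdiv; rewrite Rmult_assoc, Rinv_l; lra. }
  destruct factor_facts as [HA [HB' [HQ [HD [_ [Hd [HK _]]]]]]].
  destruct (small_case Hs) as [Ha [Hb Hc]].
  set (e1 := exp ((k - 1) * Re z)) in *; set (e2 := exp (k * Re z)) in *.
  assert (He1 : 0 < e1) by apply exp_pos; assert (He2 : 0 < e2) by apply exp_pos.
  (* lower bound: [D^th >= (e2 (1-d))^{2 th} >= e1 e2 (1-d)^2] *)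
  assert (Hlow : e1 * e2 * (1 - d) ^ 2 <= rpow D th).
  { apply Rle_trans with (rpow ((e2 * (1 - d)) ^ 2) th).
    2:{ apply rpow_le_base; [|lra]; split; [apply pow_le; nra|].
        eapply Rle_trans; [|exact HD]; apply pow_incr; nra. }
    rewrite Rpow_mult_distr, rpow_mult by (apply pow_le; lra).
    apply Rmult_le_compat; [nra|apply pow_le; lra| |].
    - unfold e1, e2; rewrite exp_pow_n, rpow_exp, <- exp_plus; right; f_equal.
      unfold th; simpl; field; lra.
    - apply rpow_ge_self; [|lra]; split; [apply pow_lt; lra|].
      rewrite <- (pow1 2); apply pow_incr; lra. }
  assert (Hup : A * B' <= e1 * e2 * (1 + 2 * d) ^ 2).
  { replace (e1 * e2 * (1 + 2 * d) ^ 2) with ((e1 * (1 + 2 * d)) * (e2 * (1 + 2 * d))) by ring.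
    now apply Rmult_le_compat. }
  assert (Hr := ratio_bound d ltac:(lra)).
  assert (0 <= (1 - d) ^ 2) by (apply pow_le; lra).
  assert ((1 + 2 * d) ^ 2 <= K * (1 - d) ^ 2) by nra.
  assert (0 < e1 * e2) by nra.
  assert (e1 * e2 * (1 + 2 * d) ^ 2 <= K * (e1 * e2 * (1 - d) ^ 2)) by nra.
  generalize (exp_pos ((14 + 4 / k) * d)); fold K; nra.
Qed.

Lemma factor_gt_large : 1 / 2 < k -> INR l / exp 2 < kap k * Cmod z ->
  A * B' <= K * rpow D ((2 * k - 1) / (2 * k)).
Proof.
  intros Hk2 HL; set (th := (2 * k - 1) / (2 * k)).
  destruct factor_facts as [HA [HB' [HQ [_ [HQD [_ [_ HK]]]]]]].
  destruct (large_case HL) as [Ha [Hb HQ1]].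
  assert (Hr := r_k_gt_half k Hk2); fold th in Hr.
  assert (Hth : 0 <= th) by (unfold th; apply Rlt_le, Rdiv_lt_0_compat; lra).
  assert (HQ2 : A * B' <= Q ^ 2) by (simpl; rewrite Rmult_1_r; now apply Rmult_le_compat).
  (* [Q^2 <= Q^{2 r_k th} = (Q^{2 r_k})^th <= D^th] since [Q >= 1] *)
  assert (Q ^ 2 <= rpow D th).
  { rewrite <- rpow_pow by (auto; lia).
    eapply Rle_trans; [apply (rpow_le_exponent Q (INR 2) (INR (2 * r_k k) * th)); auto|].
    rewrite <- rpow_rpow, rpow_pow by (auto using r_k_pos); apply rpow_le_base; auto.
    split; [apply pow_le|]; auto. }
  generalize (rpow_ge0 D th); nra.
Qed.

Lemma factor_gt : 1 / 2 < k -> A * B' <= K * rpow D ((2 * k - 1) / (2 * k)).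
Proof.
  intros Hk2; destruct (Rle_dec (kap k * Cmod z) (INR l / exp 2)) as [Hs|Hs].
  - now apply factor_gt_small.
  - apply factor_gt_large; lra.
Qed.

Lemma factor_le_small : k <= 1 / 2 -> kap k * Cmod z <= INR l / exp 2 ->
  A ^ 2 * rpow B' (2 / k) <= K * D.
Proof.
  intros Hk2 Hs.
  destruct factor_facts as [HA [HB' [HQ [HD [_ [Hd [_ _]]]]]]].
  destruct (small_case Hs) as [Ha [Hb Hc]].
  set (x := Re z) in *; set (e1 := exp ((k - 1) * x)) in *; set (e2 := exp (k * x)) in *.
  assert (He1 : 0 < e1) by apply exp_pos; assert (He2 : 0 < e2) by apply exp_pos.
  assert (H1 : A ^ 2 <= e1 ^ 2 * (1 + 2 * d) ^ 2)
    by (rewrite <- Rpow_mult_distr; apply pow_incr; split; auto).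
  assert (H2 : rpow B' (2 / k) <= exp (2 * x) * exp (4 * d / k)).
  { eapply Rle_trans; [apply rpow_le_base; [split; [exact HB'|exact Hb]|];
      left; apply Rdiv_lt_0_compat; lra|].
    rewrite rpow_mult by (lra || (left; apply exp_pos)).
    unfold e2; rewrite rpow_exp; apply Rmult_le_compat.
    - left; apply exp_pos.
    - apply rpow_ge0.
    - right; f_equal; field; lra.
    - eapply Rle_trans; [apply rpow_le_base; [split; [lra|apply (exp_ineq1_le (2 * d))]|]|].
      + left; apply Rdiv_lt_0_compat; lra.
      + rewrite rpow_exp; right; f_equal; field; lra. }
  assert (H3 : e2 ^ 2 * (1 - d) ^ 2 <= D)
    by (eapply Rle_trans; [|exact HD]; rewrite <- Rpow_mult_distr; apply pow_incr; nra).
  (* the main terms match: [e1^2 e^{2x} = e2^2] *)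
  assert (Hid : e1 ^ 2 * exp (2 * x) = e2 ^ 2)
    by (unfold e1, e2; rewrite !exp_pow_n, <- exp_plus; f_equal; simpl; ring).
  assert (HK : K = exp (4 * d / k) * exp (14 * d))
    by (unfold K; rewrite <- exp_plus; f_equal; field; lra).
  assert (Hr := ratio_bound d ltac:(lra)).
  assert (Hmain : A ^ 2 * rpow B' (2 / k) <= e2 ^ 2 * exp (4 * d / k) * (1 + 2 * d) ^ 2).
  { rewrite <- Hid; apply Rle_trans with (e1 ^ 2 * (1 + 2 * d) ^ 2 * (exp (2 * x) * exp (4 * d / k)));
      [apply Rmult_le_compat; [apply pow_le; auto|apply rpow_ge0|auto|auto]|right; ring]. }
  assert (0 < e2 ^ 2 * exp (4 * d / k)) by (generalize (exp_pos (4 * d / k)) (pow_lt e2 2 He2); nra).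
  assert (0 < exp (4 * d / k) * exp (14 * d)) by (generalize (exp_pos (4 * d / k)) (exp_pos (14 * d)); nra).
  rewrite HK; eapply Rle_trans; [exact Hmain|].
  apply Rle_trans with (exp (4 * d / k) * exp (14 * d) * (e2 ^ 2 * (1 - d) ^ 2)); [|nra].
  replace (exp (4 * d / k) * exp (14 * d) * (e2 ^ 2 * (1 - d) ^ 2))
    with (e2 ^ 2 * exp (4 * d / k) * (exp (14 * d) * (1 - d) ^ 2)) by ring.
  apply Rmult_le_compat_l; lra.
Qed.

Lemma factor_le_large : k <= 1 / 2 -> INR l / exp 2 < kap k * Cmod z ->
  A ^ 2 * rpow B' (2 / k) <= K * D.
Proof.
  intros Hk2 HL.
  destruct factor_facts as [HA [HB' [HQ [_ [HQD [_ [_ HK]]]]]]].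
  destruct (large_case HL) as [Ha [Hb HQ1]].
  assert (Hr := r_k_le_half k ltac:(lra)).
  assert (Hk' : 0 < 2 / k) by (apply Rdiv_lt_0_compat; lra).
  (* [A^2 B'^{2/k} <= Q^{2 + 2/k} <= Q^{2 r_k} <= D] since [Q >= 1] *)
  assert (H1 : A ^ 2 <= Q ^ 2) by (apply pow_incr; auto).
  assert (H2 : rpow B' (2 / k) <= rpow Q (2 / k)) by (apply rpow_le_base; [split|]; lra).
  assert (H3 : Q ^ 2 * rpow Q (2 / k) <= Q ^ (2 * r_k k)).
  { rewrite <- (rpow_pow Q 2), <- rpow_plus, <- rpow_pow by (auto using r_k_pos; lia || lra).
    now apply rpow_le_exponent. }
  generalize (rpow_ge0 B' (2 / k)) (pow_le A 2 HA) (Cmod_ge_0 (texp l (Cmult (RtoC k) z))); intros.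
  assert (A ^ 2 * rpow B' (2 / k) <= Q ^ 2 * rpow Q (2 / k)) by (apply Rmult_le_compat; auto).
  assert (0 <= D) by (generalize (pow_le Q (2 * r_k k) HQ); lra).
  nra.
Qed.

Lemma factor_le : k <= 1 / 2 -> A ^ 2 * rpow B' (2 / k) <= K * D.
Proof.
  intros Hk2; destruct (Rle_dec (kap k * Cmod z) (INR l / exp 2)) as [Hs|Hs].
  - now apply factor_le_small.
  - apply factor_le_large; lra.
Qed.

End Factor.

(** * The parameters [alpha_j]: geometric growth and [alpha_J <= 1] *)

Lemma geom20 n : rsum (seq 1 n) (fun j => 20 ^ (j - 1)) * 19 + 1 = 20 ^ n.
Proof.
  induction n as [|n IH]; [unfold rsum; simpl; ring|].
  rewrite seq_S, rsum_app; unfold rsum at 2; simpl.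
  replace (n - 0)%nat with n by lia; simpl pow; lra.
Qed.

Lemma Mpow_small M : 20 <= M -> Rpower 10 (- M) <= 1 / 20.
Proof.
  intros HM; unfold Rpower.
  assert (Hl : 1 <= ln 10).
  { rewrite <- (ln_exp 1); apply ln_le; [apply exp_pos|generalize exp1_bounds; lra]. }
  apply Rle_trans with (exp (- M)); [apply exp_mono; nra|].
  rewrite exp_Ropp; assert (21 <= exp M) by (generalize (exp_ineq1_le M); lra).
  replace (1 / 20) with (/ 20) by field; apply Rinv_le_contravar; lra.
Qed.

Lemma alpha_S T j : alpha T (S j) = 20 ^ j / ln (ln T) ^ 2.
Proof. reflexivity. Qed.

Section Alpha.
Variables (T M : R) (J : nat).
Hypotheses (HT : exp (exp 1) <= T) (HM : 20 <= M) (HJ : is_calJ T M J).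

Lemma loglog_ge1 : 1 <= ln (ln T).
Proof.
  assert (H1 : exp 1 <= ln T) by (rewrite <- (ln_exp (exp 1)); apply ln_le; auto; apply exp_pos).
  rewrite <- (ln_exp 1); apply ln_le; auto; apply exp_pos.
Qed.

Lemma alpha_pos j : (1 <= j)%nat -> 0 < alpha T j.
Proof.
  intros Hj; destruct j as [|j]; [lia|]; rewrite !alpha_S.
  apply Rdiv_lt_0_compat; apply pow_lt; generalize loglog_ge1; lra.
Qed.

(* The last parameter: [alpha_J = 20 alpha_{J-1} <= 20 * 10^{-M} <= 1]. *)
Lemma alpha_J_le1 : alpha T J <= 1.
Proof.
  destruct HJ as [H1 [H2 _]].
  assert (HL : 1 <= ln (ln T) ^ 2) by (rewrite <- (pow1 2); apply pow_incr; generalize loglog_ge1; lra).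
  destruct J as [|[|J']]; [lia| |].
  - rewrite !alpha_S; simpl pow; unfold Rdiv; rewrite Rmult_1_l, <- Rinv_1.
    apply Rinv_le_contravar; lra.
  - replace (S (S J') - 1)%nat with (S J') in H2 by lia.
    assert (H3 := Mpow_small M HM); rewrite !alpha_S in *.
    replace (20 ^ S J') with (20 * 20 ^ J') by reflexivity.
    unfold Rdiv in *; rewrite Rmult_assoc; lra.
Qed.

Lemma alpha_in_unit j : In j (seq 1 J) -> 0 < alpha T j <= 1.
Proof.
  intros Hj; apply in_seq in Hj; split; [apply alpha_pos; lia|].
  eapply Rle_trans; [|apply alpha_J_le1].
  destruct j as [|j]; [lia|]; destruct J as [|J']; [lia|]; rewrite !alpha_S.
  unfold Rdiv; apply Rmult_le_compat_r;
    [left; apply Rinv_0_lt_compat, pow_lt; generalize loglog_ge1; lra|].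
  apply Rle_pow; [lra|lia].
Qed.

(* Geometric growth makes the whole sum comparable to its last term. *)
Lemma alpha_sum : rsum (seq 1 J) (fun j => alpha T j) <= 2.
Proof.
  assert (HL2 : 0 < ln (ln T) ^ 2) by (apply pow_lt; generalize loglog_ge1; lra).
  rewrite (rsum_ext_in _ _ (fun j => / ln (ln T) ^ 2 * 20 ^ (j - 1))).
  2:{ intros j Hj; apply in_seq in Hj; destruct j as [|j]; [lia|]; rewrite !alpha_S.
      replace (S j - 1)%nat with j by lia; unfold Rdiv; ring. }
  rewrite rsum_scal; assert (G := geom20 J); assert (HA := alpha_J_le1).
  destruct HJ as [H1 _]; destruct J as [|J']; [lia|].
  rewrite alpha_S in HA; replace (20 ^ S J') with (20 * 20 ^ J') in G by reflexivity.
  assert (0 < / ln (ln T) ^ 2) by (now apply Rinv_0_lt_compat).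
  unfold Rdiv in HA.
  assert (/ ln (ln T) ^ 2 * rsum (seq 1 (S J')) (fun j => 20 ^ (j - 1)) * 19
            <= 20 * (20 ^ J' * / ln (ln T) ^ 2)) by nra.
  lra.
Qed.

End Alpha.

(* The size parameter of [E_{l_j}] makes [e^{-ceil(l_j)/4}] as small as [alpha_j]. *)
Lemma texp_degree_decay k T j : 0 < k -> 0 < alpha T j <= 1 ->
  exp (- (INR (ceilN (ellj k T j)) / 4)) <= 4 * alpha T j / k ^ 2.
Proof.
  intros Hk [Ha0 Ha1]; set (a := alpha T j) in *; set (L := INR (ceilN (ellj k T j))).
  assert (HeL := ceilN_ge (ellj k T j)); fold L in HeL.
  (* [a^{-3/2} >= 1/a] since [a <= 1] *)
  assert (Hp : 1 / a <= Rpower a (- (3 / 4)) ^ 2).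
  { rewrite <- Rpower_pow, Rpower_mult by (unfold Rpower; apply exp_pos).
    replace (1 / a) with (Rpower a (Ropp 1)) by (rewrite Rpower_Ropp, Rpower_1 by auto; field; lra).
    unfold Rpower; apply exp_mono.
    assert (ln a <= 0) by (rewrite <- ln_1; apply ln_le; lra).
    simpl; nra. }
  assert (He2 := exp2_bounds).
  assert (Hell : 0 < ellj k T j)
    by (unfold ellj; apply Rmult_lt_0_compat; [apply Rmult_lt_0_compat; [apply exp_pos|auto]|apply exp_pos]).
  assert (HL2 : 16 * k ^ 2 / a <= L ^ 2).
  { apply Rle_trans with (ellj k T j ^ 2); [|apply pow_incr; lra].
    unfold ellj; rewrite !Rpow_mult_distr.
    replace (16 * k ^ 2 / a) with (16 * k ^ 2 * (1 / a)) by (field; lra).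
    assert (0 <= k ^ 2) by (apply pow_le; lra).
    assert (0 <= 1 / a) by (apply Rlt_le, Rdiv_lt_0_compat; lra).
    apply Rmult_le_compat; [nra|auto| |auto].
    apply Rmult_le_compat_r; [auto|simpl; nra]. }
  assert (He : L ^ 2 / 64 <= exp (L / 4))
    by (replace (L ^ 2 / 64) with ((L / 4) ^ 2 / 4) by field; apply exp_sq_lower; lra).
  rewrite exp_Ropp; assert (0 < exp (L / 4)) by apply exp_pos.
  assert (Hk2 : 0 < k ^ 2) by (apply pow_lt; lra).
  replace (4 * a / k ^ 2) with (/ (16 * k ^ 2 / a / 64)) by (field; lra).
  apply Rinv_le_contravar; [apply Rdiv_lt_0_compat; [apply Rdiv_lt_0_compat|]; lra|lra].
Qed.

Lemma Crpow_conj a s : Crpow a (Copp (Cconj s)) = Cconj (Crpow a (Copp s)).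
Proof.
  destruct s as [x y]; unfold Crpow, Cexp, Cconj, Copp, Cmult, RtoC, Re, Im; simpl.
  replace (ln a * - x - 0 * - - y) with (ln a * - x - 0 * - y) by ring.
  replace (ln a * - - y + 0 * - x) with (- (ln a * - y + 0 * - x)) by ring.
  rewrite sin_neg, cos_neg; f_equal; ring.
Qed.

(* [P_j] is a Dirichlet polynomial with real coefficients. *)
Lemma Pj_conj T j s : Pj T j (Cconj s) = Cconj (Pj T j s).
Proof.
  assert (Hc0 : Cconj (RtoC 0) = RtoC 0) by (unfold Cconj, RtoC; simpl; f_equal; ring).
  unfold Pj; rewrite <- csum_conj; unfold csum; f_equal; apply map_ext; intros n.
  repeat destruct (_ : {_} + {_}); auto; apply Crpow_conj.
Qed.

Definition Dj (k T : R) (j : nat) (s : C) : R :=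
  Cmod (Nj k T j s k) ^ 2 + Cmod (Qj k T j s) ^ (2 * r_k k).
Definition dj (k T : R) (j : nat) : R := exp (- (INR (ceilN (ellj k T j)) / 4)).

Lemma Dj_ge0 k T j s : 0 <= Dj k T j s.
Proof. unfold Dj; apply Rplus_le_le_0_compat; apply pow_le, Cmod_ge_0. Qed.

Lemma prodNQ_ge0 k T J s : 0 <= prodNQ k T J s.
Proof. apply rprod_ge0; intros; apply Dj_ge0. Qed.

Lemma ceil_ellj_pos k T j : 0 < k -> 0 < alpha T j -> (1 <= ceilN (ellj k T j))%nat.
Proof.
  intros Hk Ha; apply ceilN_pos; unfold ellj.
  apply Rmult_lt_0_compat; [apply Rmult_lt_0_compat; [apply exp_pos|auto]|apply exp_pos].
Qed.

Lemma Nj_factor_gt k T j s : 1 / 2 < k -> 0 < alpha T j ->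
  Cmod (Nj k T j s (k - 1)) * Cmod (Nj k T j (Cconj s) k) <=
  exp ((14 + 4 / k) * dj k T j) * rpow (Dj k T j s) ((2 * k - 1) / (2 * k)).
Proof.
  intros Hk Ha; unfold Nj, Dj, Qj, dj, Eexp; rewrite Pj_conj.
  apply (factor_gt k); [lra|apply ceil_ellj_pos; auto; lra|auto].
Qed.

Lemma Nj_factor_le k T j s : 0 < k <= 1 / 2 -> 0 < alpha T j ->
  Cmod (Nj k T j s (k - 1)) ^ 2 * rpow (Cmod (Nj k T j (Cconj s) k)) (2 / k) <=
  exp ((14 + 4 / k) * dj k T j) * Dj k T j s.
Proof.
  intros Hk Ha; unfold Nj, Dj, Qj, dj, Eexp; rewrite Pj_conj.
  apply (factor_le k); [lra|apply ceil_ellj_pos; auto; lra|lra].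
Qed.

(* The constant lost in the product over [j]: [sum_j (14 + 4/k) d_j <= (14 + 4/k) 8/k^2]. *)
Definition mol_const (k : R) : R := exp ((14 + 4 / k) * (8 / k ^ 2)).

Section Mollifier.
Variables (k T : R) (J : nat).
Hypotheses (Hk : 0 < k) (Halpha : forall j, In j (seq 1 J) -> 0 < alpha T j <= 1)
  (Hsum : rsum (seq 1 J) (fun j => alpha T j) <= 2).

Lemma dj_sum : exp (rsum (seq 1 J) (fun j => (14 + 4 / k) * dj k T j)) <= mol_const k.
Proof.
  apply exp_mono; rewrite rsum_scal; apply Rmult_le_compat_l;
    [generalize (Rdiv_lt_0_compat 4 k ltac:(lra) Hk); lra|].
  assert (0 < 4 / k ^ 2) by (apply Rdiv_lt_0_compat; [lra|apply pow_lt; lra]).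
  apply Rle_trans with (rsum (seq 1 J) (fun j => 4 / k ^ 2 * alpha T j)).
  - apply rsum_le; intros j Hj; unfold dj; eapply Rle_trans;
      [apply texp_degree_decay; auto|right; unfold Rdiv; ring].
  - rewrite rsum_scal; replace (8 / k ^ 2) with (4 / k ^ 2 * 2) by (unfold Rdiv; ring).
    apply Rmult_le_compat_l; [lra|exact Hsum].
Qed.

Lemma mollifier_gt s : 1 / 2 < k ->
  Cmod (Nmol k T J s (k - 1)) * Cmod (Nmol k T J (Cconj s) k) <=
  mol_const k * rpow (prodNQ k T J s) ((2 * k - 1) / (2 * k)).
Proof.
  intros Hk2; unfold Nmol; rewrite !Cmod_cprod, <- rprod_mult.
  eapply Rle_trans; [apply rprod_le with (g := fun j =>
    exp ((14 + 4 / k) * dj k T j) * rpow (Dj k T j s) ((2 * k - 1) / (2 * k)))|].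
  - intros j Hj; split; [apply Rmult_le_pos; apply Cmod_ge_0|].
    apply Nj_factor_gt; auto; now apply Halpha.
  - rewrite rprod_mult, rprod_exp, rprod_rpow by (intros; apply Dj_ge0).
    apply Rmult_le_compat_r; [apply rpow_ge0|apply dj_sum].
Qed.

Lemma mollifier_le s : k <= 1 / 2 ->
  Cmod (Nmol k T J s (k - 1)) ^ 2 * rpow (Cmod (Nmol k T J (Cconj s) k)) (2 / k) <=
  mol_const k * prodNQ k T J s.
Proof.
  intros Hk2; unfold Nmol; rewrite !Cmod_cprod, <- rprod_pow2,
    <- rprod_rpow, <- rprod_mult by (intros; apply Cmod_ge_0).
  eapply Rle_trans; [apply rprod_le with (g := fun j =>
    exp ((14 + 4 / k) * dj k T j) * Dj k T j s)|].
  - intros j Hj; split; [apply Rmult_le_pos; [apply pow_le, Cmod_ge_0|apply rpow_ge0]|].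
    apply Nj_factor_le; [lra|now apply Halpha].
  - rewrite rprod_mult, rprod_exp.
    apply Rmult_le_compat_r; [apply prodNQ_ge0|apply dj_sum].
Qed.

End Mollifier.

(** * Summation over the zeros *)

Lemma split_product X a b k : 0 <= X -> 0 <= a -> 0 < k < 1 ->
  X * (a * b) = rpow X k * rpow (X * a) (1 - k) * (rpow a k * b).
Proof.
  intros HX Ha Hk.
  destruct (Rle_lt_or_eq_dec _ _ HX) as [HX'|<-]; [|rewrite (rpow_nonpos 0) by lra; ring].
  destruct (Rle_lt_or_eq_dec _ _ Ha) as [Ha'|<-];
    [|rewrite Rmult_0_r, (rpow_nonpos 0) by lra; ring].
  rewrite rpow_mult by lra.
  transitivity ((rpow X k * rpow X (1 - k)) * (rpow a (1 - k) * rpow a k) * b); [|ring].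
  rewrite <- !rpow_plus by auto; replace (k + (1 - k)) with 1 by ring.
  replace (1 - k + k) with 1 by ring; rewrite !rpow_1 by lra; ring.
Qed.

Section WeightedSums.
Context {A : Type}.
Variables (l : list A) (w X a b P : A -> R) (C k : R).
Hypothesis Hnonneg :
  forall x, In x l -> 0 <= w x /\ 0 <= X x /\ 0 <= a x /\ 0 <= b x /\ 0 <= P x.
Hypothesis HC : 0 <= C.

(* From [a b <= C P^{(2k-1)/(2k)}]: Hölder with exponents [2k] and [2k/(2k-1)]. *)
Lemma weighted_bound_gt : 1 / 2 < k ->
  (forall x, In x l -> a x * b x <= C * rpow (P x) ((2 * k - 1) / (2 * k))) ->
  rsum l (fun x => w x * (X x * (a x * b x))) <=
  C * rpow (rsum l (fun x => w x * rpow (X x) (2 * k))) (1 / (2 * k)) *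
      rpow (rsum l (fun x => w x * P x)) ((2 * k - 1) / (2 * k)).
Proof.
  intros Hk Hab; set (th := (2 * k - 1) / (2 * k)).
  apply Rle_trans with (rsum l (fun x => C * (w x * (X x * rpow (P x) th)))).
  { apply rsum_le; intros x Hx; destruct (Hnonneg x Hx) as [Hw [HX _]].
    replace (C * (w x * (X x * rpow (P x) th))) with (w x * (X x * (C * rpow (P x) th))) by ring.
    apply Rmult_le_compat_l; [|apply Rmult_le_compat_l]; auto. }
  rewrite rsum_scal, Rmult_assoc; apply Rmult_le_compat_l; [auto|].
  eapply Rle_trans.
  { apply (holder l w (fun x Hx => proj1 (Hnonneg x Hx)) (2 * k) (2 * k / (2 * k - 1))).
    - lra.
    - apply (Rmult_lt_reg_r (2 * k - 1)); [lra|]; unfold Rdiv; rewrite Rmult_assoc, Rinv_l; lra.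
    - field; lra.
    - intros x Hx; split; [apply Hnonneg; auto|apply rpow_ge0]. }
  cbv beta; rewrite (rsum_ext_in l (fun x => w x * rpow (rpow (P x) th) (2 * k / (2 * k - 1)))
    (fun x => w x * P x)).
  - replace (1 / (2 * k / (2 * k - 1))) with th by (unfold th; field; lra); lra.
  - intros x Hx; rewrite rpow_rpow by (apply Hnonneg; auto).
    replace (th * (2 * k / (2 * k - 1))) with 1 by (unfold th; field; lra).
    rewrite rpow_1; auto; apply Hnonneg; auto.
Qed.

(* Three-factor Hölder after splitting [X a b = X^k (X a)^{1-k} (a^k b)],
   with exponents [2, 2/(1-k), 2/k]. *)
Lemma holder_split : 0 < k < 1 ->
  rsum l (fun x => w x * (X x * (a x * b x))) <=
  rpow (rsum l (fun x => w x * rpow (X x) (2 * k))) (1 / 2) *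
  rpow (rsum l (fun x => w x * (X x ^ 2 * a x ^ 2))) ((1 - k) / 2) *
  rpow (rsum l (fun x => w x * (a x ^ 2 * rpow (b x) (2 / k)))) (k / 2).
Proof.
  intros Hk.
  rewrite (rsum_ext_in l _ (fun x => w x *
    (rpow (X x) k * rpow (X x * a x) (1 - k) * (rpow (a x) k * b x))))
    by (intros x Hx; destruct (Hnonneg x Hx) as [_ [? [? _]]]; rewrite <- split_product; auto).
  eapply Rle_trans.
  { apply (holder3 l w (fun x => rpow (X x) k) (fun x => rpow (X x * a x) (1 - k))
      (fun x => rpow (a x) k * b x) 2 (2 / (1 - k)) (2 / k)).
    - lra.
    - apply (Rmult_lt_reg_r (1 - k)); [lra|]; unfold Rdiv; rewrite Rmult_assoc, Rinv_l; lra.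
    - apply (Rmult_lt_reg_r k); [lra|]; unfold Rdiv; rewrite Rmult_assoc, Rinv_l; lra.
    - field; lra.
    - intros x Hx; destruct (Hnonneg x Hx) as [? [? [? [? ?]]]].
      repeat split; auto; try apply rpow_ge0; apply Rmult_le_pos; auto; apply rpow_ge0. }
  cbv beta; replace (1 / (2 / (1 - k))) with ((1 - k) / 2) by (field; lra).
  replace (1 / (2 / k)) with (k / 2) by (field; lra).
  rewrite (rsum_ext_in l (fun x => w x * rpow (rpow (X x) k) 2)
            (fun x => w x * rpow (X x) (2 * k)))
    by (intros x Hx; rewrite rpow_rpow, Rmult_comm with (r1 := k); auto; apply Hnonneg; auto).
  rewrite (rsum_ext_in l (fun x => w x * rpow (rpow (X x * a x) (1 - k)) (2 / (1 - k)))
            (fun x => w x * (X x ^ 2 * a x ^ 2))).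
  2:{ intros x Hx; destruct (Hnonneg x Hx) as [_ [? [? _]]].
      rewrite rpow_rpow by (apply Rmult_le_pos; auto).
      replace ((1 - k) * (2 / (1 - k))) with (INR 2) by (simpl; field; lra).
      now rewrite rpow_pow, Rpow_mult_distr by (try apply Rmult_le_pos; auto). }
  rewrite (rsum_ext_in l (fun x => w x * rpow (rpow (a x) k * b x) (2 / k))
            (fun x => w x * (a x ^ 2 * rpow (b x) (2 / k)))); [lra|].
  intros x Hx; destruct (Hnonneg x Hx) as [_ [_ [? [? _]]]].
  rewrite rpow_mult, rpow_rpow by (auto || apply rpow_ge0).
  replace (k * (2 / k)) with (INR 2) by (simpl; field; lra).
  now rewrite rpow_pow by (auto || lia).
Qed.

Lemma weighted_bound_le : 0 < k <= 1 / 2 ->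
  (forall x, In x l -> a x ^ 2 * rpow (b x) (2 / k) <= C * P x) ->
  rsum l (fun x => w x * (X x * (a x * b x))) <=
  rpow C (k / 2) * rpow (rsum l (fun x => w x * rpow (X x) (2 * k))) (1 / 2) *
    rpow (rsum l (fun x => w x * (X x ^ 2 * a x ^ 2))) ((1 - k) / 2) *
    rpow (rsum l (fun x => w x * P x)) (k / 2).
Proof.
  intros Hk Hab; eapply Rle_trans; [apply holder_split; lra|].
  assert (HS : rsum l (fun x => w x * (a x ^ 2 * rpow (b x) (2 / k))) <= C * rsum l (fun x => w x * P x)).
  { rewrite <- rsum_scal; apply rsum_le; intros x Hx.
    replace (C * (w x * P x)) with (w x * (C * P x)) by ring.
    apply Rmult_le_compat_l; [apply Hnonneg|apply Hab]; auto. }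
  assert (HP : 0 <= rsum l (fun x => w x * P x))
    by (apply rsum_ge0; intros x Hx; apply Rmult_le_pos; apply Hnonneg; auto).
  set (r1 := rpow (rsum l (fun x => w x * rpow (X x) (2 * k))) (1 / 2)).
  set (r2 := rpow (rsum l (fun x => w x * (X x ^ 2 * a x ^ 2))) ((1 - k) / 2)).
  replace (rpow C (k / 2) * r1 * r2 * rpow (rsum l (fun x => w x * P x)) (k / 2))
    with (r1 * r2 * (rpow C (k / 2) * rpow (rsum l (fun x => w x * P x)) (k / 2))) by ring.
  apply Rmult_le_compat_l; [apply Rmult_le_pos; apply rpow_ge0|].
  rewrite <- rpow_mult by auto; apply rpow_le_base; [split; auto|lra].
  apply rsum_ge0; intros x Hx; destruct (Hnonneg x Hx) as [? [_ [? _]]].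
  apply Rmult_le_pos; [|apply Rmult_le_pos; [apply pow_le|apply rpow_ge0]]; auto.
Qed.

End WeightedSums.

Lemma zsumC_le l (F G H : C -> C) :
  Cmod (zsumC l (fun r => Cmult (Cmult (F r) (G r)) (H r))) <=
  rsum l (fun p => INR (snd p) *
    (Cmod (F (rho (fst p))) * (Cmod (G (rho (fst p))) * Cmod (H (rho (fst p)))))).
Proof.
  unfold zsumC; eapply Rle_trans; [apply Cmod_csum_le|]; right; apply rsum_ext_in; intros p _.
  rewrite !Cmod_mult, Cmod_R, Rabs_pos_eq by apply pos_INR; ring.
Qed.

Section ZeroSums.
Variables (k T : R) (J : nat) (l : list (R * nat)).
Hypotheses (Halpha : forall j, In j (seq 1 J) -> 0 < alpha T j <= 1)
  (Hsum : rsum (seq 1 J) (fun j => alpha T j) <= 2).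

Let Hnonneg (x : R * nat) (_ : In x l) :
  0 <= INR (snd x) /\ 0 <= Cmod (zeta' (rho (fst x))) /\
  0 <= Cmod (Nmol k T J (rho (fst x)) (k - 1)) /\
  0 <= Cmod (Nmol k T J (Cconj (rho (fst x))) k) /\ 0 <= prodNQ k T J (rho (fst x)).
Proof. repeat split; apply pos_INR || apply Cmod_ge_0 || apply prodNQ_ge0. Qed.

Lemma zero_sum_le : 0 < k <= 1 / 2 ->
  Cmod (zsumC l (fun r => Cmult (Cmult (zeta' r) (Nmol k T J r (k - 1))) (Nmol k T J (Cconj r) k)))
  <= rpow (mol_const k) (k / 2) * rpow (zsumR l (fun r => rpow (Cmod (zeta' r)) (2 * k))) (1 / 2)
     * rpow (zsumR l (fun r => Cmod (zeta' r) ^ 2 * Cmod (Nmol k T J r (k - 1)) ^ 2)) ((1 - k) / 2)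
     * rpow (zsumR l (fun r => prodNQ k T J r)) (k / 2).
Proof.
  intros Hk; eapply Rle_trans; [apply zsumC_le|].
  apply (weighted_bound_le l _ _ _ _ _ _ k Hnonneg); [left; apply exp_pos|exact Hk|].
  intros x _; apply mollifier_le; auto; lra.
Qed.

Lemma zero_sum_gt : 1 / 2 < k ->
  Cmod (zsumC l (fun r => Cmult (Cmult (zeta' r) (Nmol k T J r (k - 1))) (Nmol k T J (Cconj r) k)))
  <= mol_const k * rpow (zsumR l (fun r => rpow (Cmod (zeta' r)) (2 * k))) (1 / (2 * k))
     * rpow (zsumR l (fun r => prodNQ k T J r)) ((2 * k - 1) / (2 * k)).
Proof.
  intros Hk; eapply Rle_trans; [apply zsumC_le|].
  apply (weighted_bound_gt l _ _ _ _ _ _ k Hnonneg); [left; apply exp_pos|exact Hk|].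
  intros x _; apply mollifier_gt; auto; lra.
Qed.

End ZeroSums.

Theorem lemma3p3 :
  RH ->
  (forall k : R, 0 < k <= 1 / 2 ->
   exists M0 : R, forall M : R, M >= M0 ->
   exists Ck T0 : R, forall T : R, T >= T0 ->
   forall J : nat, is_calJ T M J ->
   forall l : list (R * nat), zeros_list T l ->
     Cmod (zsumC l (fun r => Cmult (Cmult (zeta' r) (Nmol k T J r (k - 1)))
                                   (Nmol k T J (Cconj r) k)))
     <= Ck * rpow (zsumR l (fun r => rpow (Cmod (zeta' r)) (2 * k))) (1 / 2)
           * rpow (zsumR l (fun r => Cmod (zeta' r) ^ 2 * Cmod (Nmol k T J r (k - 1)) ^ 2))
                  ((1 - k) / 2)
           * rpow (zsumR l (fun r => prodNQ k T J r)) (k / 2))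
  /\
  (forall k : R, 1 / 2 < k ->
   exists M0 : R, forall M : R, M >= M0 ->
   exists Ck T0 : R, forall T : R, T >= T0 ->
   forall J : nat, is_calJ T M J ->
   forall l : list (R * nat), zeros_list T l ->
     Cmod (zsumC l (fun r => Cmult (Cmult (zeta' r) (Nmol k T J r (k - 1)))
                                   (Nmol k T J (Cconj r) k)))
     <= Ck * rpow (zsumR l (fun r => rpow (Cmod (zeta' r)) (2 * k))) (1 / (2 * k))
           * rpow (zsumR l (fun r => prodNQ k T J r)) ((2 * k - 1) / (2 * k))).
Proof.
  (* The estimate is unconditional: M0 = 20, T0 = e^e, and the constant depends on k only. *)
  intros _; split; intros k Hk; exists 20; intros M HM.
  - exists (rpow (mol_const k) (k / 2)), (exp (exp 1)); intros T HT J HJ l _.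
    apply zero_sum_le; auto.
    + apply (alpha_in_unit T M J); auto; lra.
    + apply (alpha_sum T M J); auto; lra.
  - exists (mol_const k), (exp (exp 1)); intros T HT J HJ l _.
    apply zero_sum_gt; auto.
    + apply (alpha_in_unit T M J); auto; lra.
    + apply (alpha_sum T M J); auto; lra.
Qed.
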